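(* Assume $(\mathbf{H}_f)$ and $(\mathbf{H}_g)$, let $\eta\in C^{\beta\text{-Hol}}([-r,0],\mathbb{R}^d)$ and let $x$ be the solution of the delay equation on $[-r,T]$ with $x_0=\eta$. Let $C:=2(\|g(0)\|+L'+L_g(K+1))$ with $L':=\max\{L_f,\|f(0)\|\}$ and $K:=\frac{1}{1-2^{1-(\nu+\beta)}}$, fix $\mu\in(0,\min\{1,C\})$, and let $t_i$ and $N(t,\omega)$ be the associated stopping times and counting function. Then for every $t\in[0,T]$, $$\|x_t\|_{\infty,\beta,[-r,0]}\le (1-\mu)^{-(N(t,\omega)+1)}\big[\|\eta\|_{\infty,\beta,[-r,0]}+1\big].$$ Moreover, for every integer $k\ge1$ with $k(\nu-\beta)\ge1$, $$N(T,\omega)\le 2^{k-1}\Big(\frac{C}{\mu}\Big)^k\Big(T^{k(1-\beta)}+T^{k(\nu-\beta)}|||\omega|||^k_{\nu,[0,T]}\Big).$$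
   Context: $\|\cdot\|$ is the Euclidean norm; $r,T>0$; $C_r:=C([-r,0],\mathbb{R}^d)$ with sup norm; $x_t(u)=x(t+u)$, $u\in[-r,0]$. For $0<\alpha\le1$: $|||x|||_{\alpha,[a,b]}=\sup_{a\le s<t\le b}\frac{\|x(t)-x(s)\|}{(t-s)^\alpha}$, $\|x\|_{\infty,\alpha,[a,b]}=\sup_{[a,b]}\|x\|+|||x|||_{\alpha,[a,b]}$, $C^{\alpha\text{-Hol}}$ the space where finite. Parameters: $\nu\in(\tfrac12,1]$; $\omega\in C^{\nu\text{-Hol}}([0,T],\mathbb{R})$ with $\lim_{h\to0}\sup_{0\le s<t\le T,\,t-s\le h}\frac{|\omega(t)-\omega(s)|}{(t-s)^\nu}=0$; $\frac{1-\nu}{\nu}<\delta\le1$; $\beta\in(0,\nu)$ with $\beta\delta+\nu>1$. $(\mathbf{H}_f)$: $\|f(\xi)-f(\eta)\|\le L_f\|\xi-\eta\|_{\infty,[-r,0]}$ for $f:C_r\to\mathbb{R}^d$. $(\mathbf{H}_g)$: $g:C_r\to\mathbb{R}^d$ Fréchet $C^1$, $\|Dg\|\le L_g$, and for each $M>0$ there is $L_M$ with $\|Dg(\xi)-Dg(\eta)\|\le L_M\|\xi-\eta\|^\delta_{\infty,[-r,0]}$ for $\|\xi\|,\|\eta\|\le M$. The solution is the unique $x\in C^{\beta\text{-Hol}}([-r,T],\mathbb{R}^d)$ with $x_0=\eta$ and $x(t)=\eta(0)+\int_0^tf(x_s)ds+\int_0^tg(x_s)d\omega(s)$ (Young integral)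 for $t\in[0,T]$. Stopping times: given $C>0$ and $\mu\in(0,C)$, set $t_0=0$ and $t_{i+1}=\sup\{t\in[t_i,T]: C[(t-t_i)^{1-\beta}+(t-t_i)^{\nu-\beta}|||\omega|||_{\nu,[t_i,t]}]\le\mu\}$; the counting function is $N(t,\omega):=\#\{i\ge1: t_i<t\}$ for $t\in[0,T]$ (the number of stopping times in $(0,t)$). *)

From Stdlib Require Import Reals Lra List ClassicalEpsilon.
Open Scope R_scope.

(** Vectors of R^d are represented as [nat -> R]; only components [c < d] matter. *)
Definition Vec := nat -> R.

Fixpoint rsum (n : nat) (F : nat -> R) : R :=
  match n with O => 0 | S m => rsum m F + F m end.

Definition vnorm (d : nat) (v : Vec) : R := sqrt (rsum d (fun i => v i ^ 2)).
Definition vsub (v w : Vec) : Vec := fun i => v i - w i.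

(** Real power x^y for y > 0, with the convention 0^y = 0 (Stdlib's Rpower 0 y = 1). *)
Definition pw (x y : R) : R := if Rle_dec x 0 then 0 else Rpower x y.

(** Supremum of a set of reals: the least upper bound when the set is nonempty and
    bounded above, 0 otherwise (only used on sets that are nonempty and bounded, or
    empty sets of nonnegative quantities, where 0 is the right convention). *)
Definition Rsup (E : R -> Prop) : R :=
  match excluded_middle_informative (bound E /\ exists y, E y) with
  | left H => proj1_sig (completeness E (proj1 H) (proj2 H))
  | right _ => 0
  end.

Definition supn (d : nat) (x : R -> Vec) (a b : R) : R :=
  Rsup (fun y => exists u, a <= u <= b /\ y = vnorm d (x u)).

Definition holder (d : nat) (alpha : R) (x : R -> Vec) (a b : R) : R :=
  Rsup (fun y => exists s t, a <= s /\ s < t /\ t <= b /\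
                 y = vnorm d (vsub (x t) (x s)) / pw (t - s) alpha).

Definition holderS (alpha : R) (w : R -> R) (a b : R) : R :=
  Rsup (fun y => exists s t, a <= s /\ s < t /\ t <= b /\
                 y = Rabs (w t - w s) / pw (t - s) alpha).

Definition hnorm (d : nat) (alpha : R) (x : R -> Vec) (a b : R) : R :=
  supn d x a b + holder d alpha x a b.

Definition is_holder (d : nat) (alpha : R) (x : R -> Vec) (a b : R) : Prop :=
  exists M, forall s t, a <= s -> s < t -> t <= b ->
    vnorm d (vsub (x t) (x s)) <= M * pw (t - s) alpha.

Definition is_holderS (alpha : R) (w : R -> R) (a b : R) : Prop :=
  exists M, forall s t, a <= s -> s < t -> t <= b ->
    Rabs (w t - w s) <= M * pw (t - s) alpha.

Definition little_holderS (alpha : R) (w : R -> R) (a b : R) : Prop :=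
  forall eps, 0 < eps -> exists h, 0 < h /\
    forall s t, a <= s -> s < t -> t <= b -> t - s <= h ->
      Rabs (w t - w s) <= eps * pw (t - s) alpha.

Definition inCr (d : nat) (r : R) (xi : R -> Vec) : Prop :=
  forall u, -r <= u <= 0 -> forall eps, 0 < eps -> exists del, 0 < del /\
    forall v, -r <= v <= 0 -> Rabs (v - u) < del -> vnorm d (vsub (xi v) (xi u)) < eps.

Definition seg (x : R -> Vec) (t : R) : R -> Vec := fun u => x (t + u).

Definition zeroF : R -> Vec := fun _ _ => 0.

Definition tagged_partition (a b : R) (n : nat) (p q : nat -> R) : Prop :=
  p O = a /\ p n = b /\
  (forall i, (i < n)%nat -> p i < p (S i) /\ p i <= q i <= p (S i)).

Definition RS_sum (h : R -> Vec) (w : R -> R) (n : nat) (p q : nat -> R) (c : nat) : R :=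
  rsum n (fun i => h (q i) c * (w (p (S i)) - w (p i))).

Definition RS_integral (d : nat) (h : R -> Vec) (w : R -> R) (a b : R) (I : Vec) : Prop :=
  forall c, (c < d)%nat -> forall eps, 0 < eps -> exists del, 0 < del /\
    forall n p q, tagged_partition a b n p q ->
      (forall i, (i < n)%nat -> p (S i) - p i < del) ->
      Rabs (RS_sum h w n p q c - I c) < eps.

Definition Hf (d : nat) (r : R) (f : (R -> Vec) -> Vec) (Lf : R) : Prop :=
  forall xi et, inCr d r xi -> inCr d r et ->
    vnorm d (vsub (f xi) (f et)) <= Lf * supn d (fun u => vsub (xi u) (et u)) (-r) 0.

Definition Hg (d : nat) (r : R) (g : (R -> Vec) -> Vec)
    (Dg : (R -> Vec) -> (R -> Vec) -> Vec) (Lg delta : R) : Prop :=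
  (forall xi, inCr d r xi -> forall h1 h2 a, inCr d r h1 -> inCr d r h2 ->
     forall c, (c < d)%nat ->
       Dg xi (fun u i => h1 u i + a * h2 u i) c = Dg xi h1 c + a * Dg xi h2 c) /\
  (forall xi h, inCr d r xi -> inCr d r h ->
     vnorm d (Dg xi h) <= Lg * supn d h (-r) 0) /\
  (forall xi, inCr d r xi -> forall eps, 0 < eps -> exists del, 0 < del /\
     forall h, inCr d r h -> supn d h (-r) 0 < del ->
       vnorm d (fun i => g (fun u j => xi u j + h u j) i - g xi i - Dg xi h i)
         <= eps * supn d h (-r) 0) /\
  (forall M, 0 < M -> exists LM, forall xi et, inCr d r xi -> inCr d r et ->
     supn d xi (-r) 0 <= M -> supn d et (-r) 0 <= M ->
     forall h, inCr d r h ->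
       vnorm d (vsub (Dg xi h) (Dg et h))
         <= LM * pw (supn d (fun u => vsub (xi u) (et u)) (-r) 0) delta * supn d h (-r) 0).

Fixpoint stop (C mu beta nu T : R) (w : R -> R) (i : nat) : R :=
  match i with
  | O => 0
  | S j => let ti := stop C mu beta nu T w j in
      Rsup (fun t => ti <= t <= T /\
        C * (pw (t - ti) (1 - beta) + pw (t - ti) (nu - beta) * holderS nu w ti t) <= mu)
  end.

Definition is_count (st : nat -> R) (t : R) (N : nat) : Prop :=
  exists l : list nat, NoDup l /\
    (forall i, In i l <-> ((1 <= i)%nat /\ st i < t)) /\ length l = N.

Definition is_solution (d : nat) (r T : R) (f g : (R -> Vec) -> Vec) (w : R -> R)
    (beta : R) (eta x : R -> Vec) : Prop :=
  is_holder d beta x (-r) T /\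
  (forall u, -r <= u <= 0 -> forall c, (c < d)%nat -> x u c = eta u c) /\
  (forall t, 0 <= t <= T -> exists I1 I2,
     RS_integral d (fun s => f (seg x s)) (fun s => s) 0 t I1 /\
     RS_integral d (fun s => g (seg x s)) w 0 t I2 /\
     forall c, (c < d)%nat -> x t c = eta 0 c + I1 c + I2 c).

(* Between consecutive stopping times t_i the gauge
   C [(t - t_i)^(1-beta) + (t - t_i)^(nu-beta) |||w|||_(nu,[t_i,t])] stays below mu.  There the
   increment x(u) - x(s) splits into a Riemann integral, the frozen Young term
   g(x_s) (w(u) - w(s)) and a Young-Loeve remainder (dyadic refinement and a geometric series);
   together they are at most (u - s)^beta times the gauge times (1/2) (1 + ||x||_(beta,[-r,t])).
   Hence ||x||_(beta,[-r,t]) <= ||x||_(beta,[-r,t_i]) + mu (1 + ||x||_(beta,[-r,t])), so 1 + ||x||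
   grows at most by the factor 1/(1 - mu) per stopping interval.
   For the count, slightly enlarged stopping intervals [t_j, t_(j+1) + eps] have gauge above mu;
   as k (1 - beta) >= 1 and k (nu - beta) >= 1, the k-th power of the gauge is at most linear in
   the length, so every such interval is long, while their lengths add up to T. *)

From Stdlib Require Import Reals Lra Lia List Classical ClassicalEpsilon FunctionalExtensionality PropExtensionality.
Open Scope R_scope.

(** * Finite sums and the Euclidean norm *)

Lemma rsum_ext n F G : (forall i, (i < n)%nat -> F i = G i) -> rsum n F = rsum n G.
Proof.
  induction n as [|n IH]; simpl; intros H; auto.
  rewrite IH by (intros; apply H; lia). rewrite H by lia. auto.
Qed.

Lemma rsum_plus n F G : rsum n (fun i => F i + G i) = rsum n F + rsum n G.
Proof. induction n; simpl; [lra | rewrite IHn; lra]. Qed.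

Lemma rsum_minus n F G : rsum n (fun i => F i - G i) = rsum n F - rsum n G.
Proof. induction n; simpl; [lra | rewrite IHn; lra]. Qed.

Lemma rsum_scal n a F : rsum n (fun i => a * F i) = a * rsum n F.
Proof. induction n; simpl; [lra | rewrite IHn; lra]. Qed.

Lemma rsum_const n a : rsum n (fun _ => a) = INR n * a.
Proof. induction n; simpl rsum; [simpl; lra | rewrite IHn, S_INR; lra]. Qed.

Lemma rsum_telescope (f : nat -> R) n : rsum n (fun j => f (S j) - f j) = f n - f 0%nat.
Proof. induction n; simpl; [ring | rewrite IHn; ring]. Qed.

Lemma rsum_le n F G : (forall i, (i < n)%nat -> F i <= G i) -> rsum n F <= rsum n G.
Proof.
  induction n as [|n IH]; simpl; intros H; [lra|].
  assert (F n <= G n) by (apply H; lia).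
  assert (rsum n F <= rsum n G) by (apply IH; intros; apply H; lia).
  lra.
Qed.

Lemma rsum_nonneg n F : (forall i, (i < n)%nat -> 0 <= F i) -> 0 <= rsum n F.
Proof.
  intros H. replace 0 with (rsum n (fun _ => 0)) by (rewrite rsum_const; ring).
  apply rsum_le; auto.
Qed.

Lemma rsum_term_le n F i :
  (forall j, (j < n)%nat -> 0 <= F j) -> (i < n)%nat -> F i <= rsum n F.
Proof.
  induction n as [|n IH]; simpl; intros H Hi; [lia|].
  assert (0 <= rsum n F) by (apply rsum_nonneg; intros; apply H; lia).
  destruct (Nat.eq_dec i n) as [->|Hne]; [lra|].
  assert (F i <= rsum n F) by (apply IH; [intros; apply H|]; lia).
  assert (0 <= F n) by (apply H; lia).
  lra.
Qed.

Lemma rsum_split n m F : rsum (n + m) F = rsum n F + rsum m (fun i => F (n + i)%nat).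
Proof.
  induction m; simpl; [rewrite Nat.add_0_r; lra|].
  rewrite Nat.add_succ_r; simpl; rewrite IHm; lra.
Qed.

Lemma rsum_double m F :
  rsum (2 * m) F = rsum m (fun i => F (2 * i)%nat + F (2 * i + 1)%nat).
Proof.
  induction m as [|m IH]; [reflexivity|].
  replace (2 * S m)%nat with (S (S (2 * m))) by lia.
  change (rsum (S (S (2 * m))) F) with (rsum (2 * m) F + F (2 * m)%nat + F (S (2 * m))).
  cbn [rsum]. rewrite IH. replace (2 * m + 1)%nat with (S (2 * m)) by lia. lra.
Qed.

Lemma geom_sum_le q n : 0 <= q < 1 -> rsum n (fun k => q ^ k) <= 1 / (1 - q).
Proof.
  intros Hq.
  assert (E : rsum n (fun k => q ^ k) * (1 - q) = 1 - q ^ n).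
  { induction n; simpl; [ring|]. rewrite Rmult_plus_distr_r, IHn. ring. }
  apply Rmult_le_reg_r with (1 - q); [lra|].
  rewrite E. replace (1 / (1 - q) * (1 - q)) with 1 by (field; lra).
  pose proof (pow_le q n (proj1 Hq)). lra.
Qed.

Lemma pow_add_le a b k :
  0 <= a -> 0 <= b -> (1 <= k)%nat -> (a + b) ^ k <= 2 ^ (k - 1) * (a ^ k + b ^ k).
Proof.
  intros Ha Hb Hk. induction k as [|k IH]; [lia|]. destruct k; [simpl; lra|].
  specialize (IH ltac:(lia)). replace (S (S k) - 1)%nat with (S (S k - 1)) by lia.
  (* Chebyshev: [(a - b) (a^n - b^n) >= 0]. *)
  assert (Hx : (a + b) * (a ^ S k + b ^ S k) <= 2 * (a ^ S (S k) + b ^ S (S k))).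
  { assert (0 <= (a - b) * (a ^ S k - b ^ S k)).
    { destruct (Rle_dec a b).
      - assert (a ^ S k <= b ^ S k) by (apply pow_incr; lra). nra.
      - assert (b ^ S k <= a ^ S k) by (apply pow_incr; lra). nra. }
    simpl in *. nra. }
  pose proof (pow_le 2 (S k - 1) ltac:(lra)).
  change ((a + b) ^ S (S k)) with ((a + b) * (a + b) ^ S k).
  change (2 ^ S (S k - 1)) with (2 * 2 ^ (S k - 1)).
  apply Rle_trans with ((a + b) * (2 ^ (S k - 1) * (a ^ S k + b ^ S k))).
  - apply Rmult_le_compat_l; lra.
  - nra.
Qed.

Lemma le_epsilon_le a b : (forall e, 0 < e -> a <= b + e) -> a <= b.
Proof. intros H. destruct (Rle_dec a b); auto. specialize (H ((a - b) / 2)). lra. Qed.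

Lemma vnorm_nonneg d v : 0 <= vnorm d v.
Proof. apply sqrt_pos. Qed.

Lemma vnorm_ext d v w : (forall c, (c < d)%nat -> v c = w c) -> vnorm d v = vnorm d w.
Proof. intros H; unfold vnorm; f_equal; apply rsum_ext; intros; rewrite H; auto. Qed.

Lemma rsum_sq_nonneg d v : 0 <= rsum d (fun i => v i ^ 2).
Proof. apply rsum_nonneg; intros; apply pow2_ge_0. Qed.

Lemma vnorm_sq d v : vnorm d v ^ 2 = rsum d (fun i => v i ^ 2).
Proof. unfold vnorm. rewrite pow2_sqrt; auto. apply rsum_sq_nonneg. Qed.

Lemma vnorm_comp_le d v c : (c < d)%nat -> Rabs (v c) <= vnorm d v.
Proof.
  intros Hc. rewrite <- sqrt_Rsqr_abs. apply sqrt_le_1_alt. unfold Rsqr.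
  replace (v c * v c) with ((fun i => v i ^ 2) c) by (simpl; ring).
  apply (rsum_term_le d (fun i => v i ^ 2)); auto. intros j _; apply pow2_ge_0.
Qed.

Lemma vnorm_eq0_comp d v : vnorm d v = 0 -> forall c, (c < d)%nat -> v c = 0.
Proof.
  intros H c Hc. pose proof (vnorm_comp_le d v c Hc) as Hle. rewrite H in Hle.
  destruct (Req_dec (v c) 0) as [|Hne]; auto.
  pose proof (Rabs_pos_lt _ Hne). lra.
Qed.

Lemma vnorm_zero d : vnorm d (fun _ => 0) = 0.
Proof.
  unfold vnorm. rewrite (rsum_ext d _ (fun _ => 0)) by (intros; ring).
  rewrite rsum_const, Rmult_0_r. apply sqrt_0.
Qed.

Lemma vnorm_cauchy_schwarz d v w : rsum d (fun i => v i * w i) <= vnorm d v * vnorm d w.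
Proof.
  set (A := vnorm d v). set (B := vnorm d w).
  assert (HA : 0 <= A) by apply vnorm_nonneg. assert (HB : 0 <= B) by apply vnorm_nonneg.
  destruct (Req_dec A 0) as [A0|A0].
  { rewrite (rsum_ext d _ (fun _ => 0)), rsum_const, A0; [lra|].
    intros i Hi. rewrite (vnorm_eq0_comp d v A0 i Hi). ring. }
  destruct (Req_dec B 0) as [B0|B0].
  { rewrite (rsum_ext d _ (fun _ => 0)), rsum_const, B0; [lra|].
    intros i Hi. rewrite (vnorm_eq0_comp d w B0 i Hi). ring. }
  assert (H0 : 0 <= rsum d (fun i => (B * v i - A * w i) ^ 2)) by apply rsum_sq_nonneg.
  rewrite (rsum_ext d _ (fun i => B ^ 2 * v i ^ 2 + (A ^ 2 * w i ^ 2 - (2 * A * B) * (v i * w i))))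
    in H0 by (intros; ring).
  rewrite rsum_plus, rsum_minus, !rsum_scal, <- !vnorm_sq in H0. fold A B in H0.
  assert (0 < A * B) by (apply Rmult_lt_0_compat; lra).
  nra.
Qed.

Lemma vnorm_triang d v w : vnorm d (fun i => v i + w i) <= vnorm d v + vnorm d w.
Proof.
  assert (H : vnorm d (fun i => v i + w i) ^ 2 <= (vnorm d v + vnorm d w) ^ 2).
  { rewrite vnorm_sq.
    rewrite (rsum_ext d _ (fun i => v i ^ 2 + (w i ^ 2 + 2 * (v i * w i)))) by (intros; ring).
    rewrite !rsum_plus, rsum_scal, <- !vnorm_sq. pose proof (vnorm_cauchy_schwarz d v w). nra. }
  pose proof (vnorm_nonneg d (fun i => v i + w i)). pose proof (vnorm_nonneg d v).
  pose proof (vnorm_nonneg d w). nra.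
Qed.

Lemma vnorm_scal d a v : vnorm d (fun i => a * v i) = Rabs a * vnorm d v.
Proof.
  unfold vnorm. rewrite (rsum_ext d _ (fun i => a ^ 2 * v i ^ 2)) by (intros; ring).
  rewrite rsum_scal, sqrt_mult_alt by nra. f_equal.
  rewrite <- sqrt_Rsqr_abs. f_equal. unfold Rsqr; ring.
Qed.

Lemma vnorm_rsum d n F :
  vnorm d (fun c => rsum n (fun j => F j c)) <= rsum n (fun j => vnorm d (F j)).
Proof.
  induction n; simpl; [rewrite vnorm_zero; lra|].
  eapply Rle_trans; [apply (vnorm_triang d (fun c => rsum n (fun j => F j c)) (F n))|]. lra.
Qed.

Lemma vnorm_le_sum_abs d v : vnorm d v <= rsum d (fun c => Rabs (v c)).
Proof.
  induction d as [|d IH]; [unfold vnorm; simpl; rewrite sqrt_0; lra|].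
  unfold vnorm in *; cbn [rsum].
  assert (H1 : 0 <= rsum d (fun i => v i ^ 2)) by apply rsum_sq_nonneg.
  enough (sqrt (rsum d (fun i => v i ^ 2) + v d ^ 2)
            <= sqrt (rsum d (fun i => v i ^ 2)) + Rabs (v d)) by lra.
  pose proof (sqrt_pos (rsum d (fun i => v i ^ 2))). pose proof (Rabs_pos (v d)).
  apply Rsqr_incr_0_var; [|lra]. rewrite Rsqr_sqrt by (pose proof (pow2_ge_0 (v d)); lra).
  unfold Rsqr. replace (v d ^ 2) with (Rabs (v d) * Rabs (v d))
    by (rewrite <- Rabs_mult, Rabs_pos_eq; [ring | apply Rle_0_sqr]).
  pose proof (sqrt_sqrt _ H1). nra.
Qed.

Lemma vnorm_le_of_comp_lt d v e :
  0 <= e -> (forall c, (c < d)%nat -> Rabs (v c) < e) -> vnorm d v <= INR d * e.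
Proof.
  intros He H. eapply Rle_trans; [apply vnorm_le_sum_abs|].
  rewrite <- rsum_const. apply rsum_le. intros; left; auto.
Qed.

Lemma vnorm_le_of_approx d (J : Vec) B :
  (forall e, 0 < e -> exists V, (forall c, (c < d)%nat -> Rabs (V c - J c) < e) /\ vnorm d V <= B) ->
  vnorm d J <= B.
Proof.
  intros H. apply le_epsilon_le. intros e He.
  pose proof (pos_INR d).
  destruct (H (e / (INR d + 1))) as [V [HV HVB]]; [apply Rdiv_lt_0_compat; lra|].
  rewrite (vnorm_ext d J (fun c => V c + (J c - V c))) by (intros; ring).
  eapply Rle_trans; [apply vnorm_triang|].
  assert (vnorm d (fun c => J c - V c) <= INR d * (e / (INR d + 1))).
  { apply vnorm_le_of_comp_lt; [left; apply Rdiv_lt_0_compat; lra|].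
    intros c Hc. rewrite Rabs_minus_sym. auto. }
  assert (INR d * (e / (INR d + 1)) <= e).
  { apply Rmult_le_reg_r with (INR d + 1); [lra|].
    replace (INR d * (e / (INR d + 1)) * (INR d + 1)) with (INR d * e) by (field; lra). nra. }
  lra.
Qed.

Lemma vsub_self d a : vnorm d (vsub a a) = 0.
Proof. rewrite <- (vnorm_zero d). apply vnorm_ext; intros; unfold vsub; ring. Qed.

Lemma vsub_sym d a b : vnorm d (vsub a b) = vnorm d (vsub b a).
Proof.
  unfold vsub. rewrite <- (Rmult_1_l (vnorm d (fun i => b i - a i))).
  replace 1 with (Rabs (-1)) by (rewrite Rabs_left; lra).
  rewrite <- vnorm_scal. apply vnorm_ext; intros; ring.
Qed.

Lemma vsub_triang d a b c : vnorm d (vsub a c) <= vnorm d (vsub a b) + vnorm d (vsub b c).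
Proof.
  unfold vsub. rewrite (vnorm_ext d (fun i => a i - c i) (fun i => (a i - b i) + (b i - c i)))
    by (intros; ring).
  apply vnorm_triang.
Qed.

Lemma vnorm_le_vsub d a b : vnorm d a <= vnorm d b + vnorm d (vsub a b).
Proof.
  unfold vsub. rewrite (vnorm_ext d a (fun i => b i + (a i - b i))) by (intros; ring).
  apply vnorm_triang.
Qed.

Lemma vsub_zeroF (a : Vec) u : vsub a (zeroF u) = a.
Proof. extensionality i. unfold vsub, zeroF; ring. Qed.

Lemma vnorm_dim0 v : vnorm 0 v = 0.
Proof. unfold vnorm; simpl; apply sqrt_0. Qed.

(** * Real powers *)

Lemma exp_le_compat a b : a <= b -> exp a <= exp b.
Proof. intros [H|H]; [left; apply exp_increasing; auto | subst; lra]. Qed.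

Lemma ln_le_compat a b : 0 < a -> a <= b -> ln a <= ln b.
Proof. intros Ha [H|H]; [left; apply ln_increasing; auto | subst; lra]. Qed.

Lemma pw_nonneg x y : 0 <= pw x y.
Proof. unfold pw; destruct Rle_dec; [lra | left; apply exp_pos]. Qed.

Lemma pw_pos_eq x y : 0 < x -> pw x y = Rpower x y.
Proof. unfold pw; destruct Rle_dec; auto; lra. Qed.

Lemma pw_pos x y : 0 < x -> 0 < pw x y.
Proof. intros; rewrite pw_pos_eq; auto; apply exp_pos. Qed.

Lemma pw_nonpos x y : x <= 0 -> pw x y = 0.
Proof. unfold pw; destruct Rle_dec; auto; lra. Qed.

Lemma pw_le_base x x' y : 0 <= y -> 0 <= x <= x' -> pw x y <= pw x' y.
Proof.
  intros Hy [H0 H1]. destruct (Req_dec x 0).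
  - rewrite pw_nonpos by lra. apply pw_nonneg.
  - rewrite !pw_pos_eq by lra. apply Rle_Rpower_l; lra.
Qed.

Lemma pw_mult x z y : 0 <= x -> 0 <= z -> pw (x * z) y = pw x y * pw z y.
Proof.
  intros [Hx|Hx] [Hz|Hz];
    try (subst; rewrite ?Rmult_0_l, ?Rmult_0_r, !pw_nonpos by lra; ring).
  rewrite !pw_pos_eq by nra. symmetry; apply Rpower_mult_distr; auto.
Qed.

Lemma pw_plus x a b : 0 <= x -> pw x (a + b) = pw x a * pw x b.
Proof.
  intros Hx. destruct (Req_dec x 0); [subst; rewrite !pw_nonpos by lra; ring|].
  rewrite !pw_pos_eq by lra. apply Rpower_plus.
Qed.

Lemma pw_1 x : 0 <= x -> pw x 1 = x.
Proof.
  intros Hx. destruct (Req_dec x 0); [subst; rewrite pw_nonpos; lra|].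
  rewrite pw_pos_eq by lra. apply Rpower_1; lra.
Qed.

Lemma pw_base1 y : pw 1 y = 1.
Proof. rewrite pw_pos_eq by lra. unfold Rpower. rewrite ln_1, Rmult_0_r. apply exp_0. Qed.

Lemma pw_le_exp_anti x a b : 0 <= x <= 1 -> a <= b -> pw x b <= pw x a.
Proof.
  intros Hx Hab. destruct (Req_dec x 0); [subst; rewrite !pw_nonpos; lra|].
  rewrite !pw_pos_eq by lra. apply exp_le_compat.
  assert (ln x <= 0) by (rewrite <- ln_1; apply ln_le_compat; lra). nra.
Qed.

Lemma pw_le_1 x y : 0 <= x <= 1 -> 0 <= y -> pw x y <= 1.
Proof.
  intros Hx Hy. destruct (Req_dec x 0); [subst; rewrite pw_nonpos; lra|].
  rewrite <- (pw_base1 y). apply pw_le_base; lra.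
Qed.

Lemma pw_small y e : 0 < y -> 0 < e -> exists h, 0 < h /\ forall h', h' <= h -> pw h' y <= e.
Proof.
  intros Hy He. exists (Rpower e (/ y)). split; [apply exp_pos|].
  intros h' Hh'. destruct (Rle_dec h' 0); [rewrite pw_nonpos; lra|].
  eapply Rle_trans; [apply pw_le_base with (x' := Rpower e (/ y)); lra|].
  rewrite pw_pos_eq, Rpower_mult, Rinv_l, Rpower_1 by (try apply exp_pos; lra). lra.
Qed.

Lemma pw_INR x a k : 0 <= x -> (1 <= k)%nat -> pw x (INR k * a) = pw x a ^ k.
Proof.
  intros [Hx|Hx] Hk.
  - rewrite !pw_pos_eq by lra. rewrite Rmult_comm, <- Rpower_mult, Rpower_pow; auto.
    apply exp_pos.
  - subst. rewrite !pw_nonpos by lra. destruct k; [lia|]. simpl; ring.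
Qed.

Lemma pw_le_linear x p T : 1 <= p -> 0 <= x <= T -> pw x p <= x * pw T (p - 1).
Proof.
  intros Hp Hx. replace p with (1 + (p - 1)) at 1 by ring. rewrite pw_plus, pw_1 by lra.
  apply Rmult_le_compat_l; [lra|]. apply pw_le_base; lra.
Qed.

(** * Suprema and Hölder seminorms *)

Lemma Rsup_is_lub E : bound E -> (exists y, E y) -> is_lub E (Rsup E).
Proof.
  intros Hb Hne. unfold Rsup. destruct excluded_middle_informative as [H|H].
  - exact (proj2_sig (completeness E (proj1 H) (proj2 H))).
  - exfalso; auto.
Qed.

Lemma Rsup_ub E y : bound E -> E y -> y <= Rsup E.
Proof. intros Hb Hy. apply (Rsup_is_lub E Hb (ex_intro _ y Hy)); auto. Qed.

Lemma Rsup_lub E M : (exists y, E y) -> (forall y, E y -> y <= M) -> Rsup E <= M.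
Proof. intros Hne Hub. apply (Rsup_is_lub E (ex_intro _ M Hub) Hne); auto. Qed.

(* The junk value [Rsup E = 0] makes nonemptiness unnecessary when the bound is nonnegative. *)
Lemma Rsup_le E M : (forall y, E y -> y <= M) -> 0 <= M -> Rsup E <= M.
Proof.
  intros Hub HM. destruct (classic (exists y, E y)) as [Hne|Hemp].
  - apply Rsup_lub; auto.
  - unfold Rsup. destruct excluded_middle_informative as [H|H]; [|lra].
    exfalso; apply Hemp, H.
Qed.

Lemma Rsup_nonneg E : (forall y, E y -> 0 <= y) -> 0 <= Rsup E.
Proof.
  intros Hp. destruct (classic (bound E /\ exists y, E y)) as [[Hb [y Hy]]|H].
  - pose proof (Hp y Hy). pose proof (Rsup_ub E y Hb Hy). lra.
  - unfold Rsup. destruct excluded_middle_informative; [contradiction|lra].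
Qed.

Lemma Rsup_approx E e :
  bound E -> (exists y, E y) -> 0 < e -> exists y, E y /\ Rsup E - e < y.
Proof.
  intros Hb Hne He. apply NNPP. intros H.
  assert (Rsup E <= Rsup E - e); [|lra].
  apply Rsup_lub; auto. intros y Hy.
  destruct (Rle_dec y (Rsup E - e)); auto. exfalso; apply H; exists y; split; auto; lra.
Qed.

Lemma is_holder_sub d be x A B a b :
  is_holder d be x A B -> A <= a -> b <= B -> is_holder d be x a b.
Proof. intros [M HM] Ha Hb. exists M. intros; apply HM; lra. Qed.

Lemma is_holder_nonneg_const d be x a b :
  is_holder d be x a b -> exists M, 0 <= M /\ forall s t, a <= s -> s < t -> t <= b ->
    vnorm d (vsub (x t) (x s)) <= M * pw (t - s) be.
Proof.
  intros [M HM]. exists (Rabs M). split; [apply Rabs_pos|]. intros s t H1 H2 H3.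
  eapply Rle_trans; [apply HM; auto|].
  apply Rmult_le_compat_r; [apply pw_nonneg | apply Rle_abs].
Qed.

Lemma is_holderS_nonneg_const be w a b :
  is_holderS be w a b -> exists M, 0 <= M /\ forall s t, a <= s -> s < t -> t <= b ->
    Rabs (w t - w s) <= M * pw (t - s) be.
Proof.
  intros [M HM]. exists (Rabs M). split; [apply Rabs_pos|]. intros s t H1 H2 H3.
  eapply Rle_trans; [apply HM; auto|].
  apply Rmult_le_compat_r; [apply pw_nonneg | apply Rle_abs].
Qed.

Lemma is_holder_bounded d be x a b :
  0 <= be -> a <= b -> is_holder d be x a b ->
  exists Bd, forall u, a <= u <= b -> vnorm d (x u) <= Bd.
Proof.
  intros Hbe Hab Hh. destruct (is_holder_nonneg_const _ _ _ _ _ Hh) as [M [HM0 HM]].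
  exists (vnorm d (x a) + M * pw (b - a) be). intros u Hu.
  destruct (Req_dec u a) as [->|Hne]; [pose proof (pw_nonneg (b - a) be); nra|].
  eapply Rle_trans; [apply (vnorm_le_vsub d (x u) (x a))|].
  apply Rplus_le_compat_l. eapply Rle_trans; [apply HM; lra|].
  apply Rmult_le_compat_l; auto. apply pw_le_base; lra.
Qed.

Lemma supn_ub d x a b u :
  (exists Bd, forall u, a <= u <= b -> vnorm d (x u) <= Bd) ->
  a <= u <= b -> vnorm d (x u) <= supn d x a b.
Proof.
  intros [Bd HB] Hu. apply Rsup_ub.
  - exists Bd. intros y [u' [Hu' ->]]. auto.
  - exists u; auto.
Qed.

Lemma supn_ub_holder d be x a b u :
  0 <= be -> is_holder d be x a b -> a <= u <= b -> vnorm d (x u) <= supn d x a b.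
Proof. intros Hbe Hh Hu. apply supn_ub; auto. apply is_holder_bounded with be; auto; lra. Qed.

Lemma supn_le d x a b Bd :
  (forall u, a <= u <= b -> vnorm d (x u) <= Bd) -> 0 <= Bd -> supn d x a b <= Bd.
Proof. intros H H0. apply Rsup_le; auto. intros y [u [Hu ->]]; auto. Qed.

Lemma supn_nonneg d x a b : 0 <= supn d x a b.
Proof. apply Rsup_nonneg. intros y [u [_ ->]]; apply vnorm_nonneg. Qed.

Lemma Rdiv_le_of_le_mul (n M p : R) : 0 < p -> n <= M * p -> n / p <= M.
Proof.
  intros Hp H. apply Rmult_le_reg_r with p; auto.
  unfold Rdiv. rewrite Rmult_assoc, Rinv_l, Rmult_1_r; lra.
Qed.

Lemma holder_ub d be x a b s t :
  is_holder d be x a b -> a <= s -> s < t -> t <= b ->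
  vnorm d (vsub (x t) (x s)) <= holder d be x a b * pw (t - s) be.
Proof.
  intros Hh H1 H2 H3. destruct (is_holder_nonneg_const _ _ _ _ _ Hh) as [M [HM0 HM]].
  assert (Hp : 0 < pw (t - s) be) by (apply pw_pos; lra).
  enough (vnorm d (vsub (x t) (x s)) / pw (t - s) be <= holder d be x a b) as Hq.
  { unfold Rdiv in Hq. apply Rmult_le_compat_r with (r := pw (t - s) be) in Hq; [|lra].
    rewrite Rmult_assoc, Rinv_l, Rmult_1_r in Hq; lra. }
  apply Rsup_ub.
  - exists M. intros y [s' [t' [h1 [h2 [h3 ->]]]]].
    apply Rdiv_le_of_le_mul; [apply pw_pos; lra | apply HM; auto].
  - exists s, t; repeat split; auto.
Qed.

Lemma holder_le d be x a b Bd :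
  (forall s t, a <= s -> s < t -> t <= b -> vnorm d (vsub (x t) (x s)) <= Bd * pw (t - s) be) ->
  0 <= Bd -> holder d be x a b <= Bd.
Proof.
  intros H H0. apply Rsup_le; auto. intros y [s [t [h1 [h2 [h3 ->]]]]].
  apply Rdiv_le_of_le_mul; [apply pw_pos; lra | apply H; auto].
Qed.

Lemma holder_nonneg d be x a b : 0 <= holder d be x a b.
Proof.
  apply Rsup_nonneg. intros y [s [t [h1 [h2 [h3 ->]]]]].
  apply Rmult_le_pos; [apply vnorm_nonneg | left; apply Rinv_0_lt_compat, pw_pos; lra].
Qed.

Lemma hnorm_nonneg d be x a b : 0 <= hnorm d be x a b.
Proof. unfold hnorm. pose proof (supn_nonneg d x a b). pose proof (holder_nonneg d be x a b). lra. Qed.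

Lemma holderS_bound be w a b a' b' :
  is_holderS be w a b -> a <= a' -> b' <= b ->
  bound (fun y => exists s t, a' <= s /\ s < t /\ t <= b' /\ y = Rabs (w t - w s) / pw (t - s) be).
Proof.
  intros Hh Ha Hb. destruct (is_holderS_nonneg_const _ _ _ _ Hh) as [M [HM0 HM]].
  exists M. intros y [s [t [h1 [h2 [h3 ->]]]]].
  apply Rdiv_le_of_le_mul; [apply pw_pos; lra | apply HM; lra].
Qed.

Lemma holderS_ub be w a b a' b' s t :
  is_holderS be w a b -> a <= a' -> b' <= b -> a' <= s -> s < t -> t <= b' ->
  Rabs (w t - w s) <= holderS be w a' b' * pw (t - s) be.
Proof.
  intros Hh Ha Hb H1 H2 H3.
  assert (Hp : 0 < pw (t - s) be) by (apply pw_pos; lra).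
  enough (Rabs (w t - w s) / pw (t - s) be <= holderS be w a' b') as Hq.
  { unfold Rdiv in Hq. apply Rmult_le_compat_r with (r := pw (t - s) be) in Hq; [|lra].
    rewrite Rmult_assoc, Rinv_l, Rmult_1_r in Hq; lra. }
  apply Rsup_ub; [eapply holderS_bound; eauto|]. exists s, t; repeat split; auto.
Qed.

Lemma holderS_nonneg be w a b : 0 <= holderS be w a b.
Proof.
  apply Rsup_nonneg. intros y [s [t [h1 [h2 [h3 ->]]]]].
  apply Rmult_le_pos; [apply Rabs_pos | left; apply Rinv_0_lt_compat, pw_pos; lra].
Qed.

Lemma holderS_le be w a b M :
  (forall s t, a <= s -> s < t -> t <= b -> Rabs (w t - w s) <= M * pw (t - s) be) ->
  0 <= M -> holderS be w a b <= M.
Proof.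
  intros HM HM0. apply Rsup_le; auto. intros y [s [t [h1 [h2 [h3 ->]]]]].
  apply Rdiv_le_of_le_mul; [apply pw_pos; lra | apply HM; lra].
Qed.

Lemma holderS_mono be w a b a' b' :
  is_holderS be w a b -> a <= a' -> b' <= b -> holderS be w a' b' <= holderS be w a b.
Proof.
  intros Hh Ha Hb. apply holderS_le; [|apply holderS_nonneg].
  intros s t H1 H2 H3. apply (holderS_ub be w a b); auto; lra.
Qed.

Lemma hnorm_dim0 be x a b : hnorm 0 be x a b = 0.
Proof.
  unfold hnorm.
  assert (supn 0 x a b <= 0) by (apply supn_le; [intros; rewrite vnorm_dim0|]; lra).
  assert (holder 0 be x a b <= 0)
    by (apply holder_le; [intros; rewrite vnorm_dim0; rewrite Rmult_0_l|]; lra).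
  pose proof (supn_nonneg 0 x a b). pose proof (holder_nonneg 0 be x a b). lra.
Qed.


(** * The space C_r and the Lipschitz bound for g *)

Lemma inCr_lin d r xi et a b :
  inCr d r xi -> inCr d r et -> inCr d r (fun u j => a * xi u j + b * et u j).
Proof.
  intros H1 H2 u Hu eps Heps.
  pose proof (Rabs_pos a); pose proof (Rabs_pos b).
  set (e' := eps / (2 * (Rabs a + Rabs b + 1))).
  assert (He' : 0 < e') by (apply Rdiv_lt_0_compat; lra).
  destruct (H1 u Hu e' He') as [d1 [Hd1 H1']]. destruct (H2 u Hu e' He') as [d2 [Hd2 H2']].
  exists (Rmin d1 d2). split; [apply Rmin_pos; auto|]. intros v Hv Hvu.
  unfold vsub. rewrite (vnorm_ext d _ (fun i => a * (xi v i - xi u i) + b * (et v i - et u i)))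
    by (intros; ring).
  eapply Rle_lt_trans; [apply vnorm_triang|]. rewrite !vnorm_scal.
  assert (vnorm d (vsub (xi v) (xi u)) < e') by (apply H1'; auto; pose proof (Rmin_l d1 d2); lra).
  assert (vnorm d (vsub (et v) (et u)) < e') by (apply H2'; auto; pose proof (Rmin_r d1 d2); lra).
  unfold vsub in *.
  assert (e' * (2 * (Rabs a + Rabs b + 1)) = eps) by (unfold e'; field; lra).
  pose proof (vnorm_nonneg d (fun i => xi v i - xi u i)).
  pose proof (vnorm_nonneg d (fun i => et v i - et u i)).
  nra.
Qed.

Lemma inCr_axpy d r xi h a : inCr d r xi -> inCr d r h -> inCr d r (fun u j => xi u j + a * h u j).
Proof.
  intros Hxi Hh. replace (fun u j => xi u j + a * h u j) with (fun u j => 1 * xi u j + a * h u j)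
    by (extensionality u; extensionality j; ring).
  apply inCr_lin; auto.
Qed.

Lemma inCr_const d r (k : Vec) : inCr d r (fun _ => k).
Proof. intros u Hu eps Heps. exists 1; split; [lra|]. intros. rewrite vsub_self; lra. Qed.

Lemma seg_inCr d be r T x t :
  0 < be -> 0 <= t <= T -> is_holder d be x (-r) T -> inCr d r (seg x t).
Proof.
  intros Hbe Ht Hh. destruct (is_holder_nonneg_const _ _ _ _ _ Hh) as [M [HM0 HM]].
  intros u Hu eps Heps.
  destruct (pw_small be (eps / (M + 1)) Hbe) as [h [Hh0 Hh1]]; [apply Rdiv_lt_0_compat; lra|].
  exists h; split; auto. intros v Hv Hvu. unfold seg.
  assert (Hk : M * (eps / (M + 1)) < eps).
  { apply Rmult_lt_reg_r with (M + 1); [lra|].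
    replace (M * (eps / (M + 1)) * (M + 1)) with (M * eps) by (field; lra). nra. }
  destruct (Rtotal_order u v) as [H|[H|H]].
  - eapply Rle_lt_trans; [apply HM; lra|]. eapply Rle_lt_trans; [|apply Hk].
    apply Rmult_le_compat_l; auto. apply Hh1. rewrite Rabs_pos_eq in Hvu by lra. lra.
  - subst. rewrite vsub_self; lra.
  - rewrite vsub_sym. eapply Rle_lt_trans; [apply HM; lra|]. eapply Rle_lt_trans; [|apply Hk].
    apply Rmult_le_compat_l; auto. apply Hh1. rewrite Rabs_left in Hvu by lra. lra.
Qed.

Lemma supn_seg_le d be r x v t :
  0 < r -> 0 <= be -> 0 <= v <= t -> is_holder d be x (-r) t ->
  supn d (seg x v) (-r) 0 <= supn d x (-r) t.
Proof.
  intros Hr Hbe Hv Hh. apply supn_le; [|apply supn_nonneg]. intros u Hu.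
  apply (supn_ub_holder d be x); auto; lra.
Qed.

Lemma hnorm_seg_le d be r x t :
  0 < r -> 0 <= be -> 0 <= t -> is_holder d be x (-r) t ->
  hnorm d be (seg x t) (-r) 0 <= hnorm d be x (-r) t.
Proof.
  intros Hr Hbe Ht Hh. unfold hnorm. apply Rplus_le_compat.
  - apply (supn_seg_le d be); auto; lra.
  - apply holder_le; [|apply holder_nonneg]. intros s t' H1 H2 H3. unfold seg.
    replace (t' - s) with ((t + t') - (t + s)) by ring. apply holder_ub; auto; lra.
Qed.

Lemma hnorm_agree d be r x eta :
  (forall u, -r <= u <= 0 -> forall c, (c < d)%nat -> x u c = eta u c) ->
  hnorm d be x (-r) 0 = hnorm d be eta (-r) 0.
Proof.
  intros H. unfold hnorm, supn, holder.
  f_equal; f_equal; extensionality y; apply propositional_extensionality.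
  - split; intros [u [Hu ->]]; exists u; split; auto; apply vnorm_ext; intros; rewrite H; auto.
  - split; intros [s [t [h1 [h2 [h3 ->]]]]]; exists s, t; repeat split; auto; f_equal;
      apply vnorm_ext; intros; unfold vsub; rewrite !H; auto; lra.
Qed.

Lemma supn_scal_le d r (h : R -> Vec) a :
  (exists B, forall u, -r <= u <= 0 -> vnorm d (h u) <= B) ->
  supn d (fun u j => a * h u j) (-r) 0 <= Rabs a * supn d h (-r) 0.
Proof.
  intros Hb. apply supn_le.
  - intros u Hu. rewrite vnorm_scal. apply Rmult_le_compat_l; [apply Rabs_pos|]. apply supn_ub; auto.
  - apply Rmult_le_pos; [apply Rabs_pos | apply supn_nonneg].
Qed.

Lemma f_growth d r f Lf xi :
  Hf d r f Lf -> inCr d r xi -> vnorm d (f xi) <= vnorm d (f zeroF) + Lf * supn d xi (-r) 0.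
Proof.
  intros Hf' Hxi. eapply Rle_trans; [apply (vnorm_le_vsub d (f xi) (f zeroF))|].
  apply Rplus_le_compat_l.
  replace (supn d xi (-r) 0) with (supn d (fun u => vsub (xi u) (zeroF u)) (-r) 0).
  - apply Hf'; auto. apply (inCr_const d r (fun _ => 0)).
  - f_equal. extensionality u. apply vsub_zeroF.
Qed.

(* The operator bound evaluated at a constant function; this needs [d > 0]. *)
Lemma Hg_Lg_nonneg d r g Dg Lg delta : (0 < d)%nat -> 0 < r -> Hg d r g Dg Lg delta -> 0 <= Lg.
Proof.
  intros Hd Hr [_ [Hop _]].
  specialize (Hop zeroF (fun _ _ => 1) (inCr_const d r (fun _ => 0)) (inCr_const d r (fun _ => 1))).
  assert (Hv : 0 < vnorm d (fun _ => 1)).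
  { unfold vnorm. apply sqrt_lt_R0. rewrite (rsum_ext d _ (fun _ => 1)) by (intros; ring).
    rewrite rsum_const, Rmult_1_r. apply lt_0_INR; auto. }
  assert (vnorm d (fun _ => 1) <= supn d (fun _ _ => 1) (-r) 0).
  { apply (supn_ub d (fun _ _ => 1) (-r) 0 0); [|lra]. exists (vnorm d (fun _ => 1)); intros; lra. }
  pose proof (vnorm_nonneg d (Dg zeroF (fun _ _ => 1))).
  destruct (Rle_dec 0 Lg); auto. nra.
Qed.

(* Continuous induction on [0, 1]: the set of [s] with [|phi s' - phi 0| <= L s'] for all
   [s' <= s] has its supremum in it, and that supremum cannot be below 1. *)
Lemma mean_value_ineq d (phi : R -> Vec) L :
  0 <= L ->
  (forall s, 0 <= s <= 1 -> exists dl, 0 < dl /\ forall s', 0 <= s' <= 1 -> Rabs (s' - s) < dl ->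
     vnorm d (vsub (phi s') (phi s)) <= L * Rabs (s' - s)) ->
  vnorm d (vsub (phi 1) (phi 0)) <= L.
Proof.
  intros HL Hloc.
  set (P := fun s => vnorm d (vsub (phi s) (phi 0)) <= L * s).
  assert (P0 : P 0) by (unfold P; rewrite vsub_self; lra).
  set (A := fun s => 0 <= s <= 1 /\ forall s', 0 <= s' <= s -> P s').
  assert (HA0 : A 0) by (split; [lra | intros s' Hs'; replace s' with 0 by lra; auto]).
  assert (HAb : bound A) by (exists 1; intros y [Hy _]; lra).
  set (sg := Rsup A).
  assert (Hsg0 : 0 <= sg) by (apply Rsup_ub; auto).
  assert (Hsg1 : sg <= 1) by (apply Rsup_lub; [exists 0; auto | intros y [Hy _]; lra]).
  assert (Hbelow : forall s', 0 <= s' < sg -> P s').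
  { intros s' Hs'.
    destruct (Rsup_approx A (sg - s') HAb (ex_intro _ 0 HA0)) as [y [[Hy1 Hy2] Hy3]]; [lra|].
    apply Hy2. fold sg in Hy3. lra. }
  destruct (Hloc sg (conj Hsg0 Hsg1)) as [dl [Hdl Hloc']].
  assert (Hstep : forall s0 s1, P s0 -> 0 <= s0 -> s0 <= s1 <= 1 -> s1 - s0 < dl ->
                    (s0 = sg \/ s1 = sg) -> P s1).
  { intros s0 s1 HP0 Hs0 Hs01 Hd Hor. unfold P in *.
    eapply Rle_trans; [apply (vsub_triang d _ (phi s0))|].
    enough (vnorm d (vsub (phi s1) (phi s0)) <= L * (s1 - s0)) by nra.
    destruct Hor as [->| ->].
    - replace (s1 - sg) with (Rabs (s1 - sg)) by (rewrite Rabs_pos_eq; lra).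
      apply Hloc'; [lra|]. rewrite Rabs_pos_eq; lra.
    - rewrite vsub_sym. replace (sg - s0) with (Rabs (s0 - sg)) by (rewrite Rabs_left1; lra).
      apply Hloc'; [lra|]. rewrite Rabs_left1; lra. }
  assert (Hsg : P sg).
  { destruct (Req_dec sg 0) as [->|Hne]; auto.
    set (s0 := Rmax 0 (sg - dl / 2)).
    assert (0 <= s0 < sg /\ sg - s0 < dl) by (unfold s0, Rmax; destruct Rle_dec; lra).
    apply (Hstep s0 sg); auto; try lra. apply Hbelow; lra. }
  assert (Hsg_eq1 : sg = 1).
  { destruct (Req_dec sg 1) as [|Hne]; auto. exfalso.
    set (s1 := Rmin 1 (sg + dl / 2)).
    assert (sg < s1 <= 1 /\ s1 - sg < dl) by (unfold s1, Rmin; destruct Rle_dec; lra).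
    assert (A s1).
    { split; [lra|]. intros s' Hs'. destruct (Rlt_le_dec s' sg); [apply Hbelow; lra|].
      apply (Hstep sg s'); auto; lra. }
    assert (s1 <= sg) by (apply Rsup_ub; auto). lra. }
  rewrite Hsg_eq1 in Hsg. unfold P in Hsg. lra.
Qed.

Section LipschitzG.

Variables (d : nat) (r : R) (g : (R -> Vec) -> Vec) (Dg : (R -> Vec) -> (R -> Vec) -> Vec).
Variables (Lg delta : R).
Hypothesis hg : Hg d r g Dg Lg delta.

(* Fréchet differentiability at [xi + s h] plus the operator bound [||Dg|| <= Lg]. *)
Lemma g_line_locally_lipschitz xi h eps :
  0 <= Lg -> inCr d r xi -> inCr d r h ->
  (exists B, forall u, -r <= u <= 0 -> vnorm d (h u) <= B) -> 0 < eps ->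
  forall s, exists dl, 0 < dl /\ forall s', Rabs (s' - s) < dl ->
    vnorm d (vsub (g (fun u j => xi u j + s' * h u j)) (g (fun u j => xi u j + s * h u j)))
      <= (Lg * supn d h (-r) 0 + eps) * Rabs (s' - s).
Proof.
  intros HLg Hxi Hh Hbd Heps s. destruct hg as [_ [Hop [Hfr _]]].
  set (S := supn d h (-r) 0). assert (HS : 0 <= S) by apply supn_nonneg.
  set (zs := fun u j => xi u j + s * h u j).
  assert (Hzs : inCr d r zs) by (apply inCr_axpy; auto).
  set (e1 := eps / (S + 1)).
  assert (He1 : 0 < e1) by (apply Rdiv_lt_0_compat; lra).
  assert (He1S : e1 * S <= eps).
  { apply Rmult_le_reg_r with (S + 1); [lra|].
    replace (e1 * S * (S + 1)) with (eps * S) by (unfold e1; field; lra). nra. }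
  destruct (Hfr zs Hzs e1 He1) as [del [Hdel Hfr']].
  exists (del / (S + 1)). split; [apply Rdiv_lt_0_compat; lra|].
  intros s' Hs'. set (a := s' - s). fold a in Hs'. pose proof (Rabs_pos a).
  set (ha := fun u j => a * h u j).
  assert (Hha : inCr d r ha).
  { replace ha with (fun u j => 0 * h u j + a * h u j) by
      (extensionality u; extensionality j; unfold ha; ring). apply inCr_lin; auto. }
  assert (Hsh : supn d ha (-r) 0 <= Rabs a * S) by (apply supn_scal_le; auto).
  assert (Hlt : supn d ha (-r) 0 < del).
  { eapply Rle_lt_trans; [apply Hsh|].
    apply Rle_lt_trans with (del / (S + 1) * S); [apply Rmult_le_compat_r; lra|].
    apply Rmult_lt_reg_r with (S + 1); [lra|].
    replace (del / (S + 1) * S * (S + 1)) with (del * S) by (field; lra). nra. }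
  specialize (Hfr' ha Hha Hlt).
  replace (fun u j => zs u j + ha u j) with (fun u j => xi u j + s' * h u j) in Hfr'
    by (extensionality u; extensionality j; unfold zs, ha, a; ring).
  pose proof (Hop zs ha Hzs Hha) as Hop'.
  unfold vsub. fold zs.
  rewrite (vnorm_ext d _ (fun i => (g (fun u j => xi u j + s' * h u j) i - g zs i - Dg zs ha i)
                                   + Dg zs ha i)) by (intros; ring).
  eapply Rle_trans; [apply vnorm_triang|].
  apply Rle_trans with (e1 * (Rabs a * S) + Lg * (Rabs a * S)); [|nra].
  apply Rplus_le_compat.
  - eapply Rle_trans; [apply Hfr'|]. apply Rmult_le_compat_l; lra.
  - eapply Rle_trans; [apply Hop'|]. apply Rmult_le_compat_l; lra.
Qed.

Lemma g_lipschitz xi et :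
  0 <= Lg -> inCr d r xi -> inCr d r et ->
  (exists B, forall u, -r <= u <= 0 -> vnorm d (vsub (et u) (xi u)) <= B) ->
  vnorm d (vsub (g et) (g xi)) <= Lg * supn d (fun u => vsub (et u) (xi u)) (-r) 0.
Proof.
  intros HLg Hxi Het Hbd.
  set (h := fun u => vsub (et u) (xi u)). fold h in Hbd.
  assert (Hh : inCr d r h).
  { replace h with (fun u j => et u j + -1 * xi u j) by
      (extensionality u; extensionality j; unfold h, vsub; ring). apply inCr_axpy; auto. }
  set (z := fun s => g (fun u j => xi u j + s * h u j)).
  replace (g et) with (z 1)
    by (unfold z; f_equal; extensionality u; extensionality j; unfold h, vsub; ring).
  replace (g xi) with (z 0) by (unfold z; f_equal; extensionality u; extensionality j; ring).
  apply le_epsilon_le. intros eps Heps.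
  apply mean_value_ineq.
  - pose proof (supn_nonneg d h (-r) 0). nra.
  - intros s _. destruct (g_line_locally_lipschitz xi h eps HLg Hxi Hh Hbd Heps s) as [dl [Hdl H]].
    exists dl; split; auto. intros s' _ Hs'. apply H; auto.
Qed.

End LipschitzG.


(** * Riemann-Stieltjes sums on dyadic partitions *)

Lemma pow2_pos k : 0 < 2 ^ k.
Proof. apply pow_lt; lra. Qed.

Lemma INR_le_pow2 k : INR k <= 2 ^ k.
Proof.
  induction k; [simpl; lra|]. rewrite S_INR. simpl.
  assert (1 <= 2 ^ k) by (apply pow_R1_Rle; lra). lra.
Qed.

Lemma INR_pow2 k : INR (2 ^ k)%nat = 2 ^ k.
Proof. rewrite pow_INR. reflexivity. Qed.

Definition dyadic (s u : R) (k i : nat) : R := s + INR i * (u - s) / 2 ^ k.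

Lemma dyadic_step s u k i : dyadic s u k (S i) - dyadic s u k i = (u - s) / 2 ^ k.
Proof. unfold dyadic. rewrite S_INR. pose proof (pow2_pos k). field. lra. Qed.

Lemma dyadic_first s u k : dyadic s u k 0 = s.
Proof. unfold dyadic. simpl. pose proof (pow2_pos k). field. lra. Qed.

Lemma dyadic_last s u k : dyadic s u k (2 ^ k)%nat = u.
Proof. unfold dyadic. rewrite INR_pow2. pose proof (pow2_pos k). field. lra. Qed.

Lemma dyadic_even s u k i : dyadic s u (S k) (2 * i)%nat = dyadic s u k i.
Proof. unfold dyadic. rewrite mult_INR. simpl (INR 2). simpl pow. pose proof (pow2_pos k). field. lra. Qed.

Lemma dyadic_odd_succ s u k i : dyadic s u (S k) (S (2 * i + 1)) = dyadic s u k (S i).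
Proof. replace (S (2 * i + 1)) with (2 * S i)%nat by lia. apply dyadic_even. Qed.

Lemma dyadic_in s u k i : s <= u -> (i <= 2 ^ k)%nat -> s <= dyadic s u k i <= u.
Proof.
  intros Hsu Hi. unfold dyadic. pose proof (pow2_pos k). pose proof (pos_INR i).
  assert (INR i <= 2 ^ k) by (rewrite <- INR_pow2; apply le_INR; auto).
  assert (0 <= INR i * (u - s) / 2 ^ k <= u - s); [|lra].
  split; [apply Rmult_le_pos; [nra | left; apply Rinv_0_lt_compat; lra]|].
  apply Rmult_le_reg_r with (2 ^ k); auto.
  replace (INR i * (u - s) / 2 ^ k * 2 ^ k) with (INR i * (u - s)) by (field; lra). nra.
Qed.

Lemma dyadic_partition s u k : s < u -> tagged_partition s u (2 ^ k)%nat (dyadic s u k) (dyadic s u k).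
Proof.
  intros Hsu. split; [apply dyadic_first | split; [apply dyadic_last|]]. intros i Hi.
  pose proof (dyadic_step s u k i). pose proof (pow2_pos k).
  assert (0 < (u - s) / 2 ^ k) by (apply Rdiv_lt_0_compat; lra). lra.
Qed.

Lemma dyadic_mesh_small s u del :
  s <= u -> 0 < del -> exists K, forall k, (K <= k)%nat -> (u - s) / 2 ^ k < del.
Proof.
  intros Hsu Hdel. destruct (INR_archimed del (u - s)) as [K HK]; auto.
  exists K. intros k Hk. pose proof (pow2_pos k). apply Rmult_lt_reg_r with (2 ^ k); auto.
  replace ((u - s) / 2 ^ k * 2 ^ k) with (u - s) by (field; lra).
  assert (INR K <= INR k) by (apply le_INR; auto). pose proof (INR_le_pow2 k). nra.
Qed.

Lemma fine_partition_exists a b del :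
  a <= b -> 0 < del -> exists n p q, tagged_partition a b n p q /\
    forall i, (i < n)%nat -> p (S i) - p i < del.
Proof.
  intros Hab Hdel. destruct (Req_dec a b) as [<-|Hne].
  - exists 0%nat, (fun _ => a), (fun _ => a). repeat split; auto; intros; lia.
  - destruct (dyadic_mesh_small a b del Hab Hdel) as [K HK].
    exists (2 ^ K)%nat, (dyadic a b K), (dyadic a b K).
    split; [apply dyadic_partition; lra|]. intros i _. rewrite dyadic_step. apply HK; lia.
Qed.

Definition pcat (n1 : nat) (p1 p2 : nat -> R) (i : nat) : R :=
  if (i <=? n1)%nat then p1 i else p2 (i - n1)%nat.
Definition qcat (n1 : nat) (q1 q2 : nat -> R) (i : nat) : R :=
  if (i <? n1)%nat then q1 i else q2 (i - n1)%nat.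

Lemma pcat_lo n1 p1 p2 i : (i <= n1)%nat -> pcat n1 p1 p2 i = p1 i.
Proof. intros H. unfold pcat. destruct (Nat.leb_spec i n1); auto; lia. Qed.

Lemma pcat_hi n1 p1 p2 i : p1 n1 = p2 0%nat -> (n1 <= i)%nat -> pcat n1 p1 p2 i = p2 (i - n1)%nat.
Proof.
  intros E H. unfold pcat. destruct (Nat.leb_spec i n1); auto.
  replace i with n1 by lia. rewrite Nat.sub_diag; auto.
Qed.

Lemma qcat_lo n1 q1 q2 i : (i < n1)%nat -> qcat n1 q1 q2 i = q1 i.
Proof. intros H. unfold qcat. destruct (Nat.ltb_spec i n1); auto; lia. Qed.

Lemma qcat_hi n1 q1 q2 i : (n1 <= i)%nat -> qcat n1 q1 q2 i = q2 (i - n1)%nat.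
Proof. intros H. unfold qcat. destruct (Nat.ltb_spec i n1); auto; lia. Qed.

Lemma tagged_partition_cat a b c n1 p1 q1 n2 p2 q2 :
  tagged_partition a b n1 p1 q1 -> tagged_partition b c n2 p2 q2 ->
  tagged_partition a c (n1 + n2) (pcat n1 p1 p2) (qcat n1 q1 q2).
Proof.
  intros [H10 [H1n H1i]] [H20 [H2n H2i]]. assert (E : p1 n1 = p2 0%nat) by congruence.
  split; [|split].
  - rewrite pcat_lo by lia. auto.
  - rewrite pcat_hi by (auto; lia). replace (n1 + n2 - n1)%nat with n2 by lia. auto.
  - intros i Hi. destruct (Nat.lt_ge_cases i n1).
    + rewrite !pcat_lo, qcat_lo by lia. apply H1i; auto.
    + rewrite !pcat_hi, qcat_hi by (auto; lia).
      replace (S i - n1)%nat with (S (i - n1)) by lia. apply H2i. lia.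
Qed.

Lemma mesh_cat n1 p1 p2 n2 del :
  p1 n1 = p2 0%nat ->
  (forall i, (i < n1)%nat -> p1 (S i) - p1 i < del) ->
  (forall i, (i < n2)%nat -> p2 (S i) - p2 i < del) ->
  forall i, (i < n1 + n2)%nat -> pcat n1 p1 p2 (S i) - pcat n1 p1 p2 i < del.
Proof.
  intros E H1 H2 i Hi. destruct (Nat.lt_ge_cases i n1).
  - rewrite !pcat_lo by lia. auto.
  - rewrite !pcat_hi by (auto; lia). replace (S i - n1)%nat with (S (i - n1)) by lia. apply H2; lia.
Qed.

Lemma RS_sum_cat h w n1 p1 q1 n2 p2 q2 c :
  p1 n1 = p2 0%nat ->
  RS_sum h w (n1 + n2) (pcat n1 p1 p2) (qcat n1 q1 q2) c = RS_sum h w n1 p1 q1 c + RS_sum h w n2 p2 q2 c.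
Proof.
  intros E. unfold RS_sum. rewrite rsum_split. f_equal.
  - apply rsum_ext; intros i Hi. rewrite !pcat_lo, qcat_lo by lia. auto.
  - apply rsum_ext; intros i Hi. rewrite !pcat_hi, qcat_hi by (auto; lia).
    replace (S (n1 + i) - n1)%nat with (S i) by lia. replace (n1 + i - n1)%nat with i by lia. auto.
Qed.

(* The integral over [s, u] is the difference of the integrals from 0: concatenate a fine
   partition of [0, s] with one of [s, u]. *)
Lemma RS_integral_diff d h w s u Iu Is :
  0 <= s <= u -> RS_integral d h w 0 u Iu -> RS_integral d h w 0 s Is ->
  RS_integral d h w s u (fun c => Iu c - Is c).
Proof.
  intros Hsu HIu HIs c Hc eps Heps.
  destruct (HIu c Hc (eps / 2)) as [d1 [Hd1 H1]]; [lra|].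
  destruct (HIs c Hc (eps / 2)) as [d2 [Hd2 H2]]; [lra|].
  exists d1. split; auto. intros n p q Hp Hm.
  destruct (fine_partition_exists 0 s (Rmin d1 d2)) as [n1 [p1 [q1 [Hp1 Hm1]]]];
    [lra | apply Rmin_pos; auto|].
  assert (E : p1 n1 = p 0%nat) by (destruct Hp1 as [_ [A _]]; destruct Hp as [B _]; congruence).
  pose proof (H2 n1 p1 q1 Hp1 (fun i Hi => Rlt_le_trans _ _ _ (Hm1 i Hi) (Rmin_r _ _))) as A2.
  pose proof (H1 (n1 + n)%nat _ _ (tagged_partition_cat _ _ _ _ _ _ _ _ _ Hp1 Hp)
    (mesh_cat n1 p1 p n d1 E (fun i Hi => Rlt_le_trans _ _ _ (Hm1 i Hi) (Rmin_l _ _)) Hm)) as A1.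
  rewrite RS_sum_cat in A1 by auto.
  revert A1 A2. unfold Rabs. repeat destruct Rcase_abs; intros; lra.
Qed.

Definition dyadic_RS (h : R -> Vec) (w : R -> R) (s u : R) (k : nat) : Vec :=
  fun c => RS_sum h w (2 ^ k)%nat (dyadic s u k) (dyadic s u k) c.

Definition dyadic_cvg (d : nat) (h : R -> Vec) (w : R -> R) (s u : R) (J : Vec) : Prop :=
  forall eps, 0 < eps -> exists K, forall k, (K <= k)%nat -> forall c, (c < d)%nat ->
    Rabs (dyadic_RS h w s u k c - J c) < eps.

Lemma eventually_forall_components d (P : nat -> nat -> Prop) :
  (forall c, (c < d)%nat -> exists N0, forall n, (N0 <= n)%nat -> P n c) ->
  exists N0, forall n, (N0 <= n)%nat -> forall c, (c < d)%nat -> P n c.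
Proof.
  induction d as [|d IH]; intros H; [exists 0%nat; intros; lia|].
  destruct IH as [N1 HN1]; [intros c Hc; apply H; lia|].
  destruct (H d (Nat.lt_succ_diag_r d)) as [N2 HN2].
  exists (Nat.max N1 N2). intros n Hn c Hc. destruct (Nat.eq_dec c d) as [->|].
  - apply HN2; lia.
  - apply HN1; lia.
Qed.

Lemma RS_integral_dyadic_cvg d h w s u J :
  s < u -> RS_integral d h w s u J -> dyadic_cvg d h w s u J.
Proof.
  intros Hsu HJ eps Heps. apply eventually_forall_components. intros c Hc.
  destruct (HJ c Hc eps Heps) as [del [Hdel Hdd]].
  destruct (dyadic_mesh_small s u del ltac:(lra) Hdel) as [K HK]. exists K. intros k Hk.
  apply Hdd; [apply dyadic_partition; lra|]. intros i _. rewrite dyadic_step; auto.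
Qed.

Lemma riemann_integral_bound d (G : R -> Vec) s u B J :
  s < u -> 0 <= B -> (forall v, s <= v <= u -> vnorm d (G v) <= B) ->
  dyadic_cvg d G (fun x => x) s u J -> vnorm d J <= B * (u - s).
Proof.
  intros Hsu HB HG HJ. apply vnorm_le_of_approx. intros e He.
  destruct (HJ e He) as [K HK]. exists (dyadic_RS G (fun x => x) s u K).
  split; [intros; apply HK; auto|].
  pose proof (pow2_pos K).
  assert (Hstep : 0 <= (u - s) / 2 ^ K) by (apply Rlt_le, Rdiv_lt_0_compat; lra).
  unfold dyadic_RS, RS_sum.
  rewrite (vnorm_ext d _ (fun c => rsum (2 ^ K)%nat
     (fun i => (fun i c => (dyadic s u K (S i) - dyadic s u K i) * G (dyadic s u K i) c) i c)))
    by (intros; apply rsum_ext; intros; ring).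
  eapply Rle_trans; [apply vnorm_rsum|].
  eapply Rle_trans; [apply (rsum_le _ _ (fun _ => (u - s) / 2 ^ K * B))|].
  - intros i Hi. rewrite vnorm_scal, dyadic_step, Rabs_pos_eq by auto.
    apply Rmult_le_compat_l; auto. apply HG, dyadic_in; [lra | lia].
  - rewrite rsum_const, INR_pow2. right; field; lra.
Qed.

Lemma pw_dyadic h k th :
  0 < h -> 2 ^ k * pw (h / 2 ^ (S k)) th = pw h th * (Rpower 2 (- th) * Rpower 2 (1 - th) ^ k).
Proof.
  intros Hh. pose proof (pow2_pos (S k)).
  unfold Rdiv. rewrite pw_mult by (try lra; left; apply Rinv_0_lt_compat; auto).
  rewrite (pw_pos_eq (/ 2 ^ S k)) by (apply Rinv_0_lt_compat; auto).
  rewrite <- (Rpower_pow k (Rpower 2 (1 - th))) by apply exp_pos. rewrite Rpower_mult.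
  replace (2 ^ k) with (exp (ln (2 ^ k))) by (apply exp_ln, pow2_pos).
  unfold Rpower. rewrite ln_Rinv by auto. rewrite !ln_pow by lra.
  replace (exp (INR k * ln 2) * (pw h th * exp (th * - (INR (S k) * ln 2)))) with
    (pw h th * (exp (INR k * ln 2) * exp (th * - (INR (S k) * ln 2)))) by ring.
  f_equal. rewrite <- !exp_plus. f_equal. rewrite S_INR. ring.
Qed.

Lemma Rpower2_lt_1 a : a < 0 -> 0 < Rpower 2 a < 1.
Proof.
  intros Ha. split; [apply exp_pos|]. rewrite <- (Rpower_O 2) by lra.
  apply Rpower_lt; lra.
Qed.

Lemma dyadic_RS_refine h w s u k c :
  dyadic_RS h w s u k c - dyadic_RS h w s u (S k) c =
  rsum (2 ^ k)%nat (fun i =>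
    (h (dyadic s u k i) c - h (dyadic s u (S k) (2 * i + 1)) c) *
    (w (dyadic s u k (S i)) - w (dyadic s u (S k) (2 * i + 1)))).
Proof.
  unfold dyadic_RS, RS_sum. replace (2 ^ S k)%nat with (2 * 2 ^ k)%nat by (simpl; lia).
  rewrite rsum_double, <- rsum_minus. apply rsum_ext. intros i Hi.
  replace (S (2 * i)) with (2 * i + 1)%nat by lia. rewrite dyadic_even, dyadic_odd_succ. ring.
Qed.

Section YoungLoeve.

Variables (d : nat) (G : R -> Vec) (w : R -> R) (s u be nu LG Hw : R).
Hypotheses (Hth : 1 < be + nu) (Hsu : s < u).
Hypotheses (HLG : 0 <= LG) (HHw : 0 <= Hw).
Hypothesis HG : forall a b, s <= a -> a < b -> b <= u -> vnorm d (vsub (G b) (G a)) <= LG * pw (b - a) be.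
Hypothesis Hw' : forall a b, s <= a -> a < b -> b <= u -> Rabs (w b - w a) <= Hw * pw (b - a) nu.

Lemma dyadic_RS_refine_bound k :
  vnorm d (vsub (dyadic_RS G w s u k) (dyadic_RS G w s u (S k)))
    <= LG * Hw * pw (u - s) (nu + be) * (Rpower 2 (- (nu + be)) * Rpower 2 (1 - (nu + be)) ^ k).
Proof.
  set (l := fun i => dyadic s u k i). set (m := fun i => dyadic s u (S k) (2 * i + 1)).
  set (rr := fun i => dyadic s u k (S i)).
  rewrite (vnorm_ext d _ (fun c => rsum (2 ^ k)%nat
     (fun i => (fun i c => (w (rr i) - w (m i)) * (G (l i) c - G (m i) c)) i c)))
    by (intros; unfold vsub; rewrite dyadic_RS_refine; apply rsum_ext; intros; unfold l, m, rr; ring).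
  eapply Rle_trans; [apply vnorm_rsum|].
  set (dk := (u - s) / 2 ^ S k).
  assert (Hdk : 0 < dk) by (apply Rdiv_lt_0_compat; [lra | apply pow2_pos]).
  eapply Rle_trans; [apply (rsum_le _ _ (fun _ => LG * Hw * pw dk (nu + be)))|].
  - intros i Hi. rewrite vnorm_scal.
    assert (E1 : m i - l i = dk).
    { unfold m, l, dk. rewrite <- (dyadic_even s u k i).
      replace (2 * i + 1)%nat with (S (2 * i)) by lia. apply dyadic_step. }
    assert (E2 : rr i - m i = dk) by (unfold m, rr, dk; rewrite <- (dyadic_odd_succ s u k i); apply dyadic_step).
    assert (Hl : s <= l i) by apply (proj1 (dyadic_in s u k i ltac:(lra) ltac:(lia))).
    assert (Hr : rr i <= u) by apply (proj2 (dyadic_in s u k (S i) ltac:(lra) ltac:(lia))).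
    assert (A1 : Rabs (w (rr i) - w (m i)) <= Hw * pw dk nu) by (rewrite <- E2; apply Hw'; lra).
    assert (A2 : vnorm d (fun c => G (l i) c - G (m i) c) <= LG * pw dk be).
    { change (fun c => G (l i) c - G (m i) c) with (vsub (G (l i)) (G (m i))).
      rewrite vsub_sym, <- E1. apply HG; lra. }
    rewrite pw_plus by lra.
    apply Rle_trans with ((Hw * pw dk nu) * (LG * pw dk be)); [|right; ring].
    apply Rmult_le_compat; auto using Rabs_pos, vnorm_nonneg.
  - rewrite rsum_const, INR_pow2.
    replace (2 ^ k * (LG * Hw * pw dk (nu + be))) with (LG * Hw * (2 ^ k * pw dk (nu + be))) by ring.
    unfold dk. rewrite pw_dyadic by lra. lra.
Qed.

Lemma dyadic_RS_deviation K :
  vnorm d (vsub (dyadic_RS G w s u 0) (dyadic_RS G w s u K))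
    <= LG * Hw * (1 / (1 - Rpower 2 (1 - (nu + be)))) * pw (u - s) (nu + be).
Proof.
  set (q := Rpower 2 (1 - (nu + be))). set (c0 := LG * Hw * pw (u - s) (nu + be)).
  assert (Hq : 0 < q < 1) by (apply Rpower2_lt_1; lra).
  assert (Hr2 : 0 < Rpower 2 (- (nu + be)) < 1) by (apply Rpower2_lt_1; lra).
  assert (Hc0 : 0 <= c0) by (apply Rmult_le_pos; [nra | apply pw_nonneg]).
  apply Rle_trans with (rsum K (fun k => c0 * q ^ k)).
  - induction K as [|K IH]; simpl rsum; [rewrite vsub_self; lra|].
    eapply Rle_trans; [apply (vsub_triang d _ (dyadic_RS G w s u K))|].
    pose proof (dyadic_RS_refine_bound K). fold q c0 in H.
    assert (c0 * (Rpower 2 (- (nu + be)) * q ^ K) <= c0 * q ^ K).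
    { apply Rmult_le_compat_l; auto. pose proof (pow_le q K ltac:(lra)). nra. }
    lra.
  - rewrite rsum_scal. pose proof (geom_sum_le q K ltac:(lra)).
    replace (LG * Hw * (1 / (1 - q)) * pw (u - s) (nu + be)) with (c0 * (1 / (1 - q))) by (unfold c0; ring).
    apply Rmult_le_compat_l; auto.
Qed.

Lemma young_loeve J :
  dyadic_cvg d G w s u J ->
  vnorm d (fun c => J c - G s c * (w u - w s))
    <= LG * Hw * (1 / (1 - Rpower 2 (1 - (nu + be)))) * pw (u - s) (nu + be).
Proof.
  intros HJ. apply vnorm_le_of_approx. intros e He.
  destruct (HJ e He) as [K HK].
  exists (fun c => dyadic_RS G w s u K c - G s c * (w u - w s)). split.
  - intros c Hc. replace (dyadic_RS G w s u K c - G s c * (w u - w s) - (J c - G s c * (w u - w s)))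
      with (dyadic_RS G w s u K c - J c) by ring. apply HK; auto.
  - rewrite (vnorm_ext d _ (vsub (dyadic_RS G w s u K) (dyadic_RS G w s u 0))), vsub_sym;
      [apply dyadic_RS_deviation|].
    intros c _. unfold vsub, dyadic_RS, RS_sum. simpl.
    rewrite dyadic_first. pose proof (dyadic_last s u 0) as E. simpl in E. rewrite E. ring.
Qed.

End YoungLoeve.


(** * Stopping times *)

Section StoppingTimes.

Variables (C mu beta nu T : R) (w : R -> R).
Hypotheses (HT : 0 < T) (Hmu : 0 < mu) (HC : 0 < C) (Hb : 0 < beta < nu) (Hnu : nu <= 1).
Hypothesis Hw : is_holderS nu w 0 T.

Let st := stop C mu beta nu T w.

Definition stop_gauge i t :=
  C * (pw (t - st i) (1 - beta) + pw (t - st i) (nu - beta) * holderS nu w (st i) t).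

Lemma stop_succ i : st (S i) = Rsup (fun t => st i <= t <= T /\ stop_gauge i t <= mu).
Proof. reflexivity. Qed.

Lemma stop_gauge_at_stop i : stop_gauge i (st i) = 0.
Proof. unfold stop_gauge. rewrite Rminus_diag, !pw_nonpos by lra. ring. Qed.

Lemma stop_succ_between i : 0 <= st i <= T -> st i <= st (S i) <= T.
Proof.
  intros Hi. rewrite stop_succ.
  assert (Hin : st i <= st i <= T /\ stop_gauge i (st i) <= mu)
    by (rewrite stop_gauge_at_stop; split; lra).
  split.
  - apply Rsup_ub; auto. exists T; intros y [Hy _]; lra.
  - apply Rsup_lub; [exists (st i); auto|]. intros y [Hy _]; lra.
Qed.

Lemma stop_range i : 0 <= st i <= T /\ st i <= st (S i).
Proof.
  induction i as [|i [Hi _]].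
  - assert (0 <= st 0 <= T) by (change (st 0) with 0; lra).
    pose proof (stop_succ_between 0 H). lra.
  - pose proof (stop_succ_between i Hi). pose proof (stop_succ_between (S i) ltac:(lra)). lra.
Qed.

Lemma stop_mono i j : (i <= j)%nat -> st i <= st j.
Proof. intros Hij. induction Hij; [lra|]. pose proof (stop_range m). lra. Qed.

Lemma stop_gauge_mono i t t' : st i <= t -> t <= t' -> t' <= T -> stop_gauge i t <= stop_gauge i t'.
Proof.
  intros H1 H2 H3. pose proof (stop_range i) as [[R0 R1] _]. unfold stop_gauge.
  apply Rmult_le_compat_l; [lra|].
  apply Rplus_le_compat; [apply pw_le_base; lra|].
  apply Rmult_le_compat; [apply pw_nonneg | apply holderS_nonneg | apply pw_le_base; lra|].
  apply holderS_le; [|apply holderS_nonneg]. intros s u Hs Hsu Hu.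
  apply (holderS_ub nu w 0 T); auto; lra.
Qed.

Lemma stop_gauge_le_before_next i u : st i <= u < st (S i) -> stop_gauge i u <= mu.
Proof.
  intros Hu.
  assert (Hbd : bound (fun t => st i <= t <= T /\ stop_gauge i t <= mu)) by (exists T; intros y [Hy _]; lra).
  destruct (Rsup_approx _ (st (S i) - u) Hbd) as [t [[Ht1 Ht2] Ht3]]; [|lra|].
  - exists (st i). pose proof (stop_range i). rewrite stop_gauge_at_stop. split; lra.
  - rewrite <- stop_succ in Ht3. eapply Rle_trans; [|apply Ht2]. apply stop_gauge_mono; lra.
Qed.

Lemma stop_gauge_gt_after_next i u : st (S i) < u <= T -> st i <= u -> mu < stop_gauge i u.
Proof.
  intros Hu Hi. destruct (Rlt_le_dec mu (stop_gauge i u)); auto.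
  assert (u <= st (S i)); [|lra].
  rewrite stop_succ. apply Rsup_ub; [exists T; intros y [Hy _]; lra | split; auto; lra].
Qed.

(* The gauge is uniformly small on short intervals, so consecutive stopping times are a fixed
   distance apart until they reach [T]. *)
Lemma stop_step_lb : exists d0, 0 < d0 /\ forall i, Rmin T (st i + d0) <= st (S i).
Proof.
  destruct (is_holderS_nonneg_const _ _ _ _ Hw) as [M [HM0 HM]].
  destruct (pw_small (nu - beta) (mu / (C * (1 + M)))) as [h [Hh Hh']];
    [lra | apply Rdiv_lt_0_compat; nra|].
  exists (Rmin 1 h). split; [apply Rmin_pos; lra|]. intros i.
  pose proof (stop_range i) as [[R0 R1] _].
  set (t := Rmin T (st i + Rmin 1 h)).
  pose proof (Rmin_l 1 h). pose proof (Rmin_r 1 h).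
  assert (Ht : st i <= t <= T) by (unfold t, Rmin in *; repeat destruct Rle_dec; lra).
  assert (Ht1 : t - st i <= Rmin 1 h) by (unfold t, Rmin in *; repeat destruct Rle_dec; lra).
  rewrite stop_succ. apply Rsup_ub; [exists T; intros y [Hy _]; lra|]. split; auto.
  unfold stop_gauge.
  assert (E1 : pw (t - st i) (nu - beta) <= mu / (C * (1 + M))) by (apply Hh'; lra).
  assert (E2 : pw (t - st i) (1 - beta) <= pw (t - st i) (nu - beta)) by (apply pw_le_exp_anti; lra).
  assert (E3 : holderS nu w (st i) t <= M) by (apply holderS_le; auto; intros; apply HM; lra).
  pose proof (pw_nonneg (t - st i) (nu - beta)). pose proof (holderS_nonneg nu w (st i) t).
  assert (E4 : mu / (C * (1 + M)) * (C * (1 + M)) = mu) by (field; nra).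
  assert (pw (t - st i) (nu - beta) * holderS nu w (st i) t <= pw (t - st i) (nu - beta) * M)
    by (apply Rmult_le_compat_l; auto).
  assert (C * (pw (t - st i) (nu - beta) * (1 + M)) <= C * (mu / (C * (1 + M)) * (1 + M)))
    by (apply Rmult_le_compat_l; [lra | apply Rmult_le_compat_r; lra]).
  nra.
Qed.

Lemma stop_eventually_T : exists n0, forall i, (n0 <= i)%nat -> st i = T.
Proof.
  destruct stop_step_lb as [d0 [Hd0 Hst]].
  assert (Hlb : forall i, Rmin T (INR i * d0) <= st i).
  { induction i; [change (st 0) with 0; simpl; unfold Rmin; destruct Rle_dec; lra|].
    pose proof (Hst i). rewrite S_INR. unfold Rmin in *. repeat destruct Rle_dec; lra. }
  destruct (INR_archimed d0 T) as [n0 Hn0]; [lra|]. exists n0. intros i Hi.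
  pose proof (Hlb i). pose proof (stop_range i).
  assert (INR n0 <= INR i) by (apply le_INR; auto).
  assert (T <= INR i * d0) by nra. unfold Rmin in *. destruct Rle_dec; lra.
Qed.

Lemma stop_count_exists t :
  0 <= t <= T -> exists N, is_count st t N /\
    (forall i, (1 <= i <= N)%nat -> st i < t) /\ t <= st (S N).
Proof.
  intros Ht. destruct stop_eventually_T as [n0 Hn0].
  assert (Hm : forall m, t <= st (S m) ->
            exists N, (forall i, (1 <= i <= N)%nat -> st i < t) /\ t <= st (S N)).
  { induction m as [|m IH]; intros Hm.
    - exists 0%nat. split; auto. intros; lia.
    - destruct (Rle_dec t (st (S m))) as [Hle|Hlt]; [apply IH; auto|].
      exists (S m). split; auto. intros i Hi.
      pose proof (stop_mono i (S m) ltac:(lia)). lra. }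
  destruct (Hm n0) as [N [HN1 HN2]]; [rewrite (Hn0 (S n0)) by lia; lra|].
  exists N. split; [|split; auto].
  exists (seq 1 N). split; [apply seq_NoDup|]. split; [|apply length_seq].
  intros i. rewrite in_seq. split.
  - intros Hi. split; [lia|]. apply HN1; lia.
  - intros [Hi1 Hi2]. split; [lia|]. destruct (Nat.le_gt_cases i N); [lia|].
    pose proof (stop_mono (S N) i ltac:(lia)). lra.
Qed.

Section CountBound.

Variable k : nat.
Hypotheses (Hk : (1 <= k)%nat) (Hkn : 1 <= INR k * (nu - beta)).

Let Hw0 := holderS nu w 0 T.
Let Z := 2 ^ (k - 1) * (C / mu) ^ k *
           (pw T (INR k * (1 - beta) - 1) + pw T (INR k * (nu - beta) - 1) * Hw0 ^ k).

Lemma k_one_minus_beta_ge_1 : 1 <= INR k * (1 - beta).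
Proof. pose proof (pos_INR k). nra. Qed.

Lemma stop_gauge_pow_le j t :
  st j <= t <= T ->
  stop_gauge j t ^ k <= C ^ k * 2 ^ (k - 1) * (t - st j) *
    (pw T (INR k * (1 - beta) - 1) + pw T (INR k * (nu - beta) - 1) * Hw0 ^ k).
Proof.
  intros Ht. pose proof k_one_minus_beta_ge_1. pose proof (stop_range j) as [[R0 R1] _].
  set (D := t - st j). assert (HD : 0 <= D <= T) by (unfold D; lra).
  set (h := holderS nu w (st j) t).
  assert (Hh : 0 <= h <= Hw0) by (split; [apply holderS_nonneg | apply holderS_mono; auto; lra]).
  set (a := pw D (1 - beta)). set (b := pw D (nu - beta) * h).
  assert (Ha : 0 <= a) by apply pw_nonneg.
  assert (Hbb : 0 <= b) by (apply Rmult_le_pos; [apply pw_nonneg | lra]).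
  assert (Hak : a ^ k <= D * pw T (INR k * (1 - beta) - 1))
    by (unfold a; rewrite <- pw_INR by (lra || lia); apply pw_le_linear; auto).
  assert (Hbk : b ^ k <= D * pw T (INR k * (nu - beta) - 1) * Hw0 ^ k).
  { unfold b. rewrite Rpow_mult_distr, <- pw_INR by (lra || lia).
    pose proof (pw_le_linear D (INR k * (nu - beta)) T Hkn HD).
    pose proof (pow_incr h Hw0 k Hh). pose proof (pow_le h k (proj1 Hh)).
    pose proof (pw_nonneg D (INR k * (nu - beta))). pose proof (pw_nonneg T (INR k * (nu - beta) - 1)).
    apply Rle_trans with (D * pw T (INR k * (nu - beta) - 1) * h ^ k); [apply Rmult_le_compat_r; auto|].
    apply Rmult_le_compat_l; [apply Rmult_le_pos|]; lra. }
  unfold stop_gauge. fold D h a b. rewrite Rpow_mult_distr.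
  pose proof (pow_le C k ltac:(lra)). pose proof (pow_le 2 (k - 1) ltac:(lra)).
  pose proof (pow_add_le a b k Ha Hbb Hk).
  replace (C ^ k * 2 ^ (k - 1) * D * (pw T (INR k * (1 - beta) - 1) +
             pw T (INR k * (nu - beta) - 1) * Hw0 ^ k))
    with (C ^ k * (2 ^ (k - 1) * (D * pw T (INR k * (1 - beta) - 1) +
             D * pw T (INR k * (nu - beta) - 1) * Hw0 ^ k))) by ring.
  apply Rmult_le_compat_l; auto. eapply Rle_trans; [eassumption|].
  apply Rmult_le_compat_l; auto. lra.
Qed.

Lemma stop_gauge_gt_mu_length j t : st j <= t <= T -> mu < stop_gauge j t -> 1 <= Z * (t - st j).
Proof.
  intros Ht Hg. pose proof (stop_gauge_pow_le j t Ht).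
  assert (Hmk : mu ^ k <= stop_gauge j t ^ k) by (apply pow_incr; lra).
  assert (Hmu_k : 0 < mu ^ k) by (apply pow_lt; lra).
  apply Rmult_le_reg_l with (mu ^ k); auto.
  replace (mu ^ k * (Z * (t - st j))) with
    (C ^ k * 2 ^ (k - 1) * (t - st j) *
       (pw T (INR k * (1 - beta) - 1) + pw T (INR k * (nu - beta) - 1) * Hw0 ^ k))
    by (unfold Z, Rdiv; rewrite Rpow_mult_distr, pow_inv; field; apply pow_nonzero; lra).
  lra.
Qed.

(* Shift every stopping time before [T] by the same small [eps > 0]: each shifted interval has
   gauge above [mu], hence length at least [1 / Z], and the shifted lengths add up to [T]. *)
Lemma stop_count_le N :
  (forall i, (1 <= i <= N)%nat -> st i < T) ->
  INR N <= 2 ^ (k - 1) * (C / mu) ^ k *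
    (pw T (INR k * (1 - beta)) + pw T (INR k * (nu - beta)) * Hw0 ^ k).
Proof.
  intros HN. pose proof k_one_minus_beta_ge_1.
  replace (2 ^ (k - 1) * (C / mu) ^ k * (pw T (INR k * (1 - beta)) + pw T (INR k * (nu - beta)) * Hw0 ^ k))
    with (Z * T).
  2:{ unfold Z. replace (INR k * (1 - beta)) with (1 + (INR k * (1 - beta) - 1)) at 2 by ring.
      replace (INR k * (nu - beta)) with (1 + (INR k * (nu - beta) - 1)) at 2 by ring.
      rewrite !pw_plus, pw_1 by lra. ring. }
  destruct N as [|N'].
  { simpl INR. apply Rmult_le_pos; [|lra]. unfold Z.
    pose proof (pw_nonneg T (INR k * (1 - beta) - 1)). pose proof (pw_nonneg T (INR k * (nu - beta) - 1)).
    pose proof (pow_le Hw0 k (holderS_nonneg nu w 0 T)).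
    apply Rmult_le_pos; [apply Rmult_le_pos; apply pow_le|]; try (apply Rlt_le, Rdiv_lt_0_compat); nra. }
  set (N := S N') in *.
    assert (HNpos : 0 < INR N) by (apply lt_0_INR; unfold N; lia).
    assert (HstN : st N < T) by (apply HN; unfold N; lia).
    pose proof (stop_range N) as [[R0 _] _].
    set (eps := (T - st N) / INR N).
    assert (Heps : 0 < eps) by (apply Rdiv_lt_0_compat; lra).
    assert (HepsN : eps * INR N = T - st N) by (unfold eps; field; lra).
    assert (Hsum : rsum N (fun j => st (S j) + eps - st j) = T).
    { rewrite (rsum_ext N _ (fun j => (st (S j) - st j) + eps)) by (intros; ring).
      rewrite rsum_plus, rsum_telescope, rsum_const. change (st 0%nat) with 0. lra. }
    rewrite <- Hsum, <- rsum_scal, <- (Rmult_1_r (INR N)), <- rsum_const.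
    apply rsum_le. intros j Hj.
    pose proof (stop_range j) as [[Rj0 Rj1] Rj2].
    assert (Hsj : st (S j) <= st N) by (apply stop_mono; lia).
    assert (1 <= INR N) by (replace 1 with (INR 1) by reflexivity; apply le_INR; unfold N; lia).
    assert (eps <= T - st N) by nra.
    replace (st (S j) + eps - st j) with ((st (S j) + eps) - st j) by ring.
    apply stop_gauge_gt_mu_length; [lra|].
    apply stop_gauge_gt_after_next; lra.
Qed.

End CountBound.

End StoppingTimes.


(** * The a priori estimate *)

Lemma holder_increment_extend_right d be x a b s t Bd :
  0 < be -> is_holder d be x a b -> a <= s -> s < t -> t <= b -> 0 <= Bd ->
  (forall u, s < u < t -> vnorm d (vsub (x u) (x s)) <= Bd * pw (u - s) be) ->
  vnorm d (vsub (x t) (x s)) <= Bd * pw (t - s) be.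
Proof.
  intros Hbe Hh Ha Hst Hb HBd Hu. destruct (is_holder_nonneg_const _ _ _ _ _ Hh) as [M [HM0 HM]].
  apply le_epsilon_le. intros e He.
  destruct (pw_small be (e / (M + 1)) Hbe) as [h [Hh0 Hh1]]; [apply Rdiv_lt_0_compat; lra|].
  set (u := Rmax ((s + t) / 2) (t - h / 2)).
  assert (Hu1 : s < u < t /\ t - u <= h) by (unfold u, Rmax; destruct Rle_dec; lra).
  eapply Rle_trans; [apply (vsub_triang d _ (x u))|].
  assert (vnorm d (vsub (x t) (x u)) <= e).
  { eapply Rle_trans; [apply HM; lra|]. pose proof (Hh1 (t - u) (proj2 Hu1)).
    apply Rle_trans with (M * (e / (M + 1))); [apply Rmult_le_compat_l; auto|].
    apply Rmult_le_reg_r with (M + 1); [lra|].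
    replace (M * (e / (M + 1)) * (M + 1)) with (M * e) by (field; lra). nra. }
  assert (vnorm d (vsub (x u) (x s)) <= Bd * pw (t - s) be).
  { eapply Rle_trans; [apply Hu; lra|]. apply Rmult_le_compat_l; auto. apply pw_le_base; lra. }
  lra.
Qed.

Section ExtendInterval.

Variables (d : nat) (be r T A ti t : R) (x : R -> Vec).
Hypotheses (Hbe : 0 <= be) (HA : 0 <= A) (Hx : is_holder d be x (-r) T).
Hypotheses (Hti : -r <= ti) (Htit : ti <= t) (HtT : t <= T) (Ht1 : t - ti <= 1).
Hypothesis Hinc : forall s u, ti <= s -> s < u -> u <= t -> vnorm d (vsub (x u) (x s)) <= A * pw (u - s) be.

Lemma supn_extend_le : supn d x (-r) t <= supn d x (-r) ti + A.
Proof.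
  apply supn_le; [|pose proof (supn_nonneg d x (-r) ti); lra].
  assert (Hxti' : is_holder d be x (-r) ti) by (eapply is_holder_sub; eauto; lra).
  assert (Hxti : vnorm d (x ti) <= supn d x (-r) ti) by (apply (supn_ub_holder d be); auto; lra).
  intros v Hv. destruct (Rle_dec v ti).
  - enough (vnorm d (x v) <= supn d x (-r) ti) by lra.
    apply (supn_ub_holder d be); auto; lra.
  - eapply Rle_trans; [apply (vnorm_le_vsub d (x v) (x ti))|].
    enough (vnorm d (vsub (x v) (x ti)) <= A) by lra.
    eapply Rle_trans; [apply Hinc; lra|]. rewrite <- (Rmult_1_r A) at 2.
    apply Rmult_le_compat_l; auto. apply pw_le_1; lra.
Qed.

Lemma holder_extend_le : holder d be x (-r) t <= holder d be x (-r) ti + A.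
Proof.
  assert (Hxti : is_holder d be x (-r) ti) by (eapply is_holder_sub; eauto; lra).
  assert (HHo : 0 <= holder d be x (-r) ti) by apply holder_nonneg.
  apply holder_le; [|lra]. intros s u Hs Hsu Hut.
  pose proof (pw_nonneg (u - s) be).
  destruct (Rle_dec u ti); [|destruct (Rle_dec ti s)].
  - eapply Rle_trans; [apply holder_ub; eauto|]. nra.
  - eapply Rle_trans; [apply Hinc; lra|]. nra.
  - eapply Rle_trans; [apply (vsub_triang d _ (x ti))|].
    assert (vnorm d (vsub (x u) (x ti)) <= A * pw (u - s) be).
    { eapply Rle_trans; [apply Hinc; lra|]. apply Rmult_le_compat_l; auto. apply pw_le_base; lra. }
    assert (vnorm d (vsub (x ti) (x s)) <= holder d be x (-r) ti * pw (u - s) be).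
    { eapply Rle_trans; [apply holder_ub; eauto; lra|].
      apply Rmult_le_compat_l; auto. apply pw_le_base; lra. }
    lra.
Qed.

End ExtendInterval.

Lemma pw_split_le h A th be : 0 < h <= A -> 0 <= be <= th -> pw h th <= pw h be * pw A (th - be).
Proof.
  intros Hh Hbe. replace th with (be + (th - be)) at 1 by ring. rewrite pw_plus by lra.
  apply Rmult_le_compat_l; [apply pw_nonneg|]. apply pw_le_base; lra.
Qed.

Lemma pw_subinterval_bounds ti s u be nu :
  ti <= s < u -> u - ti <= 1 -> 0 < be < nu -> nu <= 1 ->
  u - s <= pw (u - s) be * pw (u - ti) (1 - be) /\
  pw (u - s) nu <= pw (u - s) be * pw (u - ti) (nu - be) /\
  pw (u - s) (nu + be) <= pw (u - s) be * pw (u - ti) (nu - be).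
Proof.
  intros Hsu Hti Hbe Hnu.
  assert (E2 : pw (u - s) nu <= pw (u - s) be * pw (u - ti) (nu - be)) by (apply pw_split_le; lra).
  split; [|split; auto].
  - rewrite <- (pw_1 (u - s)) at 1 by lra. apply pw_split_le; lra.
  - eapply Rle_trans; [apply (pw_le_exp_anti _ nu); lra | auto].
Qed.

Section APrioriEstimate.

Variables (d : nat) (r T nu beta delta mu Lf Lg : R) (w : R -> R).
Variables (f g : (R -> Vec) -> Vec) (Dg : (R -> Vec) -> (R -> Vec) -> Vec) (eta x : R -> Vec).
Hypotheses (Hd : (0 < d)%nat) (Hr : 0 < r) (HT : 0 < T).
Hypotheses (Hnu : nu <= 1) (Hbeta : 0 < beta < nu) (Hnb : 1 < nu + beta).
Hypotheses (Hw : is_holderS nu w 0 T) (hf : Hf d r f Lf) (hg : Hg d r g Dg Lg delta).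
Hypothesis hx : is_solution d r T f g w beta eta x.

Let L' := Rmax Lf (vnorm d (f zeroF)).
Let Kc := 1 / (1 - Rpower 2 (1 - (nu + beta))).
Let C := 2 * (vnorm d (g zeroF) + L' + Lg * (Kc + 1)).

Hypotheses (Hmu : 0 < mu) (HmuC : mu < C) (Hmu1 : mu < 1).

Lemma solution_holder : is_holder d beta x (-r) T.
Proof. apply hx. Qed.

Lemma seg_solution_inCr v : 0 <= v <= T -> inCr d r (seg x v).
Proof. intros Hv. apply (seg_inCr d beta r T); auto; [lra | apply solution_holder]. Qed.

Lemma Lg_nonneg : 0 <= Lg.
Proof. apply (Hg_Lg_nonneg d r g Dg Lg delta); auto. Qed.

Lemma Kc_pos : 0 < Kc.
Proof. pose proof (Rpower2_lt_1 (1 - (nu + beta)) ltac:(lra)). apply Rdiv_lt_0_compat; lra. Qed.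

Lemma solution_increment s u :
  0 <= s < u -> u <= T -> exists J1 J2,
    dyadic_cvg d (fun v => f (seg x v)) (fun v => v) s u J1 /\
    dyadic_cvg d (fun v => g (seg x v)) w s u J2 /\
    forall c, (c < d)%nat -> vsub (x u) (x s) c = J1 c + J2 c.
Proof.
  intros Hsu HuT. destruct hx as [_ [_ Hint]].
  destruct (Hint u ltac:(lra)) as [I1u [I2u [HI1u [HI2u Hxu]]]].
  destruct (Hint s ltac:(lra)) as [I1s [I2s [HI1s [HI2s Hxs]]]].
  exists (fun c => I1u c - I1s c), (fun c => I2u c - I2s c). split; [|split].
  - apply RS_integral_dyadic_cvg; [lra|]. apply RS_integral_diff; auto; lra.
  - apply RS_integral_dyadic_cvg; [lra|]. apply RS_integral_diff; auto; lra.
  - intros c Hc. unfold vsub. rewrite Hxu, Hxs by auto. ring.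
Qed.

Lemma f_seg_bound v t : 0 <= v <= t -> t <= T ->
  vnorm d (f (seg x v)) <= L' * (1 + supn d x (-r) t).
Proof.
  intros Hv HtT.
  assert (HL1 : Lf <= L') by apply Rmax_l. assert (HL2 : vnorm d (f zeroF) <= L') by apply Rmax_r.
  eapply Rle_trans; [apply (f_growth d r f Lf); auto; apply seg_solution_inCr; lra|].
  assert (HS : supn d (seg x v) (-r) 0 <= supn d x (-r) t)
    by (apply (supn_seg_le d beta); try lra; eapply is_holder_sub; [apply solution_holder | |]; lra).
  pose proof (supn_nonneg d (seg x v) (-r) 0). pose proof (vnorm_nonneg d (f zeroF)).
  destruct (Rle_dec 0 Lf).
  - assert (Lf * supn d (seg x v) (-r) 0 <= L' * supn d x (-r) t) by (apply Rmult_le_compat; lra). nra.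
  - assert (Lf * supn d (seg x v) (-r) 0 <= 0) by nra. pose proof (supn_nonneg d x (-r) t). nra.
Qed.

Lemma g_seg_lipschitz a b : 0 <= a <= T -> 0 <= b <= T ->
  vnorm d (vsub (g (seg x b)) (g (seg x a))) <= Lg * supn d (fun v => vsub (x (b + v)) (x (a + v))) (-r) 0.
Proof.
  intros Ha Hb0. destruct (is_holder_bounded d beta x (-r) T) as [Bd HBd];
    [lra | lra | apply solution_holder|].
  apply (g_lipschitz d r g Dg Lg delta hg); [apply Lg_nonneg | apply seg_solution_inCr; lra
    | apply seg_solution_inCr; lra |].
  exists (Bd + Bd). intros v Hv. unfold vsub.
  rewrite (vnorm_ext d _ (fun j => x (b + v) j + -1 * x (a + v) j)) by (intros; ring).
  eapply Rle_trans; [apply vnorm_triang|]. rewrite vnorm_scal.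
  replace (Rabs (-1)) with 1 by (rewrite Rabs_left; lra).
  pose proof (HBd (b + v) ltac:(lra)). pose proof (HBd (a + v) ltac:(lra)). lra.
Qed.

Lemma g_seg_bound v t : 0 <= v <= t -> t <= T ->
  vnorm d (g (seg x v)) <= vnorm d (g zeroF) + Lg * supn d x (-r) t.
Proof.
  intros Hv HtT. eapply Rle_trans; [apply (vnorm_le_vsub d _ (g zeroF))|]. apply Rplus_le_compat_l.
  assert (Hxt : is_holder d beta x (-r) t) by (eapply is_holder_sub; [apply solution_holder | |]; lra).
  eapply Rle_trans.
  - apply (g_lipschitz d r g Dg Lg delta hg); auto using Lg_nonneg.
    + apply (inCr_const d r (fun _ => 0)).
    + apply seg_solution_inCr; lra.
    + destruct (is_holder_bounded d beta x (-r) t) as [Bd HBd]; try lra; auto.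
      exists Bd. intros u Hu. rewrite vsub_zeroF. apply HBd; lra.
  - apply Rmult_le_compat_l; [apply Lg_nonneg|]. apply supn_le; [|apply supn_nonneg].
    intros u Hu. rewrite vsub_zeroF. unfold seg. apply (supn_ub_holder d beta); auto; lra.
Qed.

Lemma g_seg_holder a b t : 0 <= a -> a < b -> b <= t -> t <= T ->
  vnorm d (vsub (g (seg x b)) (g (seg x a))) <= Lg * holder d beta x (-r) t * pw (b - a) beta.
Proof.
  intros Ha Hab Hbt HtT.
  assert (Hxt : is_holder d beta x (-r) t) by (eapply is_holder_sub; [apply solution_holder | |]; lra).
  eapply Rle_trans; [apply g_seg_lipschitz; lra|].
  rewrite Rmult_assoc. apply Rmult_le_compat_l; [apply Lg_nonneg|].
  apply supn_le; [|apply Rmult_le_pos; [apply holder_nonneg | apply pw_nonneg]].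
  intros v Hv. replace (b - a) with ((b + v) - (a + v)) by ring. apply holder_ub; auto; lra.
Qed.

(* The Riemann part is bounded on [[s, u]]; for the Young part, the frozen integrand
   [g (x_s)] contributes [g (x_s) (w u - w s)] and the rest is the Young--Loève remainder. *)
Lemma solution_increment_le s u t : 0 <= s < u -> u <= t -> t <= T ->
  vnorm d (vsub (x u) (x s)) <=
    L' * (1 + supn d x (-r) t) * (u - s)
    + Lg * holder d beta x (-r) t * holderS nu w s u * Kc * pw (u - s) (nu + beta)
    + Rabs (w u - w s) * (vnorm d (g zeroF) + Lg * supn d x (-r) t).
Proof.
  intros Hsu Hut HtT.
  destruct (solution_increment s u) as [J1 [J2 [HJ1 [HJ2 Hx]]]]; [lra | lra|].
  assert (HL' : vnorm d (f zeroF) <= L') by apply Rmax_r. pose proof (vnorm_nonneg d (f zeroF)).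
  pose proof (supn_nonneg d x (-r) t). pose proof (holder_nonneg d beta x (-r) t).
  assert (HJ1b : vnorm d J1 <= L' * (1 + supn d x (-r) t) * (u - s)).
  { apply (riemann_integral_bound d (fun v => f (seg x v))); auto; [lra | nra |].
    intros v Hv. apply f_seg_bound; lra. }
  assert (HJ2b : vnorm d (fun c => J2 c - g (seg x s) c * (w u - w s))
               <= Lg * holder d beta x (-r) t * holderS nu w s u * Kc * pw (u - s) (nu + beta)).
  { unfold Kc. apply (young_loeve d (fun v => g (seg x v)) w s u beta nu); auto; try lra.
    - apply Rmult_le_pos; [apply Lg_nonneg | auto].
    - apply holderS_nonneg.
    - intros a b Ha Hab Hb'. apply g_seg_holder; lra.
    - intros a b Ha Hab Hb'. apply (holderS_ub nu w 0 T); auto; lra. }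
  assert (Hg0b : Rabs (w u - w s) * vnorm d (g (seg x s))
               <= Rabs (w u - w s) * (vnorm d (g zeroF) + Lg * supn d x (-r) t))
    by (apply Rmult_le_compat_l; [apply Rabs_pos | apply g_seg_bound; lra]).
  rewrite (vnorm_ext d _ (fun c => J1 c + ((J2 c - g (seg x s) c * (w u - w s)) + (w u - w s) * g (seg x s) c)))
    by (intros c Hc; rewrite Hx by auto; ring).
  eapply Rle_trans; [apply vnorm_triang|]. eapply Rle_trans; [apply Rplus_le_compat_l, vnorm_triang|].
  rewrite vnorm_scal. lra.
Qed.

Definition gauge_below ti t :=
  forall v, ti <= v < t -> C * (pw (v - ti) (1 - beta) + pw (v - ti) (nu - beta) * holderS nu w ti v) <= mu.

Lemma gauge_below_length ti t : gauge_below ti t -> t - ti <= 1.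
Proof.
  intros HF. destruct (Rle_dec (t - ti) 1) as [|Hgt]; auto. exfalso.
  specialize (HF (ti + 1) ltac:(lra)). replace (ti + 1 - ti) with 1 in HF by ring.
  rewrite pw_base1 in HF. pose proof (pw_nonneg 1 (nu - beta)). pose proof (holderS_nonneg nu w ti (ti + 1)).
  assert (0 <= C * (pw 1 (nu - beta) * holderS nu w ti (ti + 1))) by (apply Rmult_le_pos; [lra | nra]).
  nra.
Qed.

Lemma C_half_dominates S Hx : 0 <= S -> 0 <= Hx ->
  L' * (1 + S) <= C / 2 * (1 + (S + Hx)) /\
  Lg * Hx * Kc + vnorm d (g zeroF) + Lg * S <= C / 2 * (1 + (S + Hx)).
Proof.
  intros HS HHx. set (G0 := vnorm d (g zeroF)). assert (HG0 : 0 <= G0) by apply vnorm_nonneg.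
  pose proof Lg_nonneg. pose proof Kc_pos.
  assert (HL2 : vnorm d (f zeroF) <= L') by apply Rmax_r. pose proof (vnorm_nonneg d (f zeroF)).
  assert (HC2 : C / 2 = G0 + L' + Lg * Kc + Lg) by (unfold C, G0; field).
  assert (HLK : 0 <= Lg * Kc) by nra.
  rewrite HC2. split; [apply Rmult_le_compat; lra|].
  assert (Lg * Kc * Hx <= Lg * Kc * (1 + (S + Hx))) by (apply Rmult_le_compat_l; lra).
  assert (Lg * S <= Lg * (1 + (S + Hx))) by (apply Rmult_le_compat_l; lra).
  assert (G0 <= G0 * (1 + (S + Hx))) by nra.
  assert (0 <= L' * (1 + (S + Hx))) by (apply Rmult_le_pos; lra).
  nra.
Qed.

(* On a stopping interval each of the three terms of [solution_increment_le] is at most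
   [pw (u - s) beta] times a gauge term times [C / 2 (1 + ||x||)]. *)
Lemma increment_bound ti t s u :
  0 <= ti -> t <= T -> gauge_below ti t -> ti <= s -> s < u -> u < t ->
  vnorm d (vsub (x u) (x s)) <= mu / 2 * (1 + hnorm d beta x (-r) t) * pw (u - s) beta.
Proof.
  intros Hti HtT HF Hs Hsu Hut.
  set (S := supn d x (-r) t). set (Hx := holder d beta x (-r) t).
  set (Hw' := holderS nu w ti u). set (G0 := vnorm d (g zeroF)).
  assert (HS0 : 0 <= S) by apply supn_nonneg. assert (HHx0 : 0 <= Hx) by apply holder_nonneg.
  assert (HHw : 0 <= Hw') by apply holderS_nonneg. assert (HG0 : 0 <= G0) by apply vnorm_nonneg.
  pose proof Lg_nonneg. pose proof Kc_pos. pose proof (holderS_nonneg nu w s u).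
  assert (HL : 0 <= L') by (assert (vnorm d (f zeroF) <= L') by apply Rmax_r;
                            pose proof (vnorm_nonneg d (f zeroF)); lra).
  destruct (C_half_dominates S Hx HS0 HHx0) as [X1 X2]. fold G0 in X2.
  pose proof (HF u ltac:(lra)) as HFu. fold Hw' in HFu.
  set (P := pw (u - s) beta). set (a := pw (u - ti) (1 - beta)). set (b := pw (u - ti) (nu - beta)).
  fold a b in HFu.
  assert (HP : 0 < P) by (apply pw_pos; lra).
  assert (Ha : 0 <= a) by apply pw_nonneg. assert (Hbb : 0 <= b) by apply pw_nonneg.
  destruct (pw_subinterval_bounds ti s u beta nu) as [E1 [E2 E3]]; auto; try lra.
  { pose proof (gauge_below_length ti t HF). lra. }
  fold P a b in E1, E2, E3.
  assert (E4 : Rabs (w u - w s) <= Hw' * (P * b)).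
  { eapply Rle_trans; [apply (holderS_ub nu w 0 T ti u); auto; lra|]. apply Rmult_le_compat_l; auto. }
  assert (E5 : holderS nu w s u <= Hw').
  { apply holderS_le; [|apply holderS_nonneg]. intros s' u' ? ? ?.
    apply (holderS_ub nu w 0 T ti u); auto; lra. }
  eapply Rle_trans; [apply (solution_increment_le s u t); lra|]. fold S Hx G0.
  change (hnorm d beta x (-r) t) with (S + Hx).
  apply Rle_trans with (P * (a * (L' * (1 + S)) + b * Hw' * (Lg * Hx * Kc + G0 + Lg * S))).
  - assert (Lg * Hx * holderS nu w s u * Kc * pw (u - s) (nu + beta) <= Lg * Hx * Hw' * Kc * (P * b)).
    { apply Rmult_le_compat; [apply Rmult_le_pos; [apply Rmult_le_pos; [apply Rmult_le_pos|]|]; lra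
                             | apply pw_nonneg | | auto].
      apply Rmult_le_compat_r; [lra|]. apply Rmult_le_compat_l; [apply Rmult_le_pos|]; lra. }
    assert (L' * (1 + S) * (u - s) <= L' * (1 + S) * (P * a)) by (apply Rmult_le_compat_l; nra).
    assert (Rabs (w u - w s) * (G0 + Lg * S) <= Hw' * (P * b) * (G0 + Lg * S))
      by (apply Rmult_le_compat_r; nra).
    nra.
  - assert (a * (L' * (1 + S)) <= a * (C / 2 * (1 + (S + Hx)))) by (apply Rmult_le_compat_l; lra).
    assert (b * Hw' * (Lg * Hx * Kc + G0 + Lg * S) <= b * Hw' * (C / 2 * (1 + (S + Hx))))
      by (apply Rmult_le_compat_l; [apply Rmult_le_pos|]; lra).
    assert ((C * a + C * (b * Hw')) / 2 * (1 + (S + Hx)) <= mu / 2 * (1 + (S + Hx)))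
      by (apply Rmult_le_compat_r; lra).
    rewrite (Rmult_comm (mu / 2 * _)). apply Rmult_le_compat_l; lra.
Qed.

Lemma increment_bound_closed ti t s u :
  0 <= ti -> t <= T -> gauge_below ti t -> ti <= s -> s < u -> u <= t ->
  vnorm d (vsub (x u) (x s)) <= mu / 2 * (1 + hnorm d beta x (-r) t) * pw (u - s) beta.
Proof.
  intros Hti HtT HF Hs Hsu Hut. destruct (Rlt_le_dec u t) as [Hlt|Hge].
  - apply (increment_bound ti); auto.
  - replace u with t by lra.
    apply (holder_increment_extend_right d beta x (-r) T); try lra; [apply solution_holder| |].
    + pose proof (hnorm_nonneg d beta x (-r) t). nra.
    + intros u' Hu'. apply (increment_bound ti); auto; lra.
Qed.

Lemma hnorm_step ti t :
  0 <= ti -> ti <= t -> t <= T -> gauge_below ti t ->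
  1 + hnorm d beta x (-r) t <= / (1 - mu) * (1 + hnorm d beta x (-r) ti).
Proof.
  intros Hti Htit HtT HF.
  set (Phi := hnorm d beta x (-r) t). pose proof (hnorm_nonneg d beta x (-r) t). fold Phi in H.
  set (A := mu / 2 * (1 + Phi)). assert (HA : 0 <= A) by (unfold A; nra).
  assert (Hinc : forall s u, ti <= s -> s < u -> u <= t -> vnorm d (vsub (x u) (x s)) <= A * pw (u - s) beta)
    by (intros; apply (increment_bound_closed ti); auto).
  pose proof (gauge_below_length ti t HF).
  assert (supn d x (-r) t <= supn d x (-r) ti + A)
    by (apply (supn_extend_le d beta r T); auto using solution_holder; lra).
  assert (holder d beta x (-r) t <= holder d beta x (-r) ti + A)
    by (apply (holder_extend_le d beta r T); auto using solution_holder; lra).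
  assert (H2A : 2 * A = mu * (1 + Phi)) by (unfold A; field).
  assert (HPhi : Phi <= hnorm d beta x (-r) ti + mu * (1 + Phi)) by (unfold Phi, hnorm in *; lra).
  apply Rmult_le_reg_l with (1 - mu); [lra|].
  rewrite <- Rmult_assoc, Rinv_r, Rmult_1_l by lra. lra.
Qed.

Local Notation st := (stop C mu beta nu T w).

Lemma C_pos : 0 < C.
Proof. lra. Qed.

Lemma gauge_below_stop j t : st j <= t <= st (S j) -> gauge_below (st j) t.
Proof.
  intros Ht v Hv. apply (stop_gauge_le_before_next C mu beta nu T w); auto using C_pos; lra.
Qed.

Lemma hnorm_stop_le j : 1 + hnorm d beta x (-r) (st j) <= (/ (1 - mu)) ^ j * (1 + hnorm d beta x (-r) 0).
Proof.
  assert (Hinv : 0 < / (1 - mu)) by (apply Rinv_0_lt_compat; lra).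
  induction j as [|j IH]; [simpl; change (st 0) with 0; lra|].
  pose proof (stop_range C mu beta nu T w HT Hmu j) as [[R0 R1] R2].
  pose proof (stop_range C mu beta nu T w HT Hmu (S j)) as [[R3 R4] _].
  eapply Rle_trans; [apply (hnorm_step (st j)); auto; apply gauge_below_stop; lra|].
  simpl. rewrite Rmult_assoc. apply Rmult_le_compat_l; lra.
Qed.

Lemma hnorm_seg_le_count t N :
  0 <= t <= T -> (forall i, (1 <= i <= N)%nat -> st i < t) -> t <= st (S N) ->
  hnorm d beta (seg x t) (-r) 0 <= / (1 - mu) ^ (N + 1) * (hnorm d beta eta (-r) 0 + 1).
Proof.
  intros Ht HN1 HN2.
  assert (Hinv : 0 < / (1 - mu)) by (apply Rinv_0_lt_compat; lra).
  pose proof (stop_range C mu beta nu T w HT Hmu N) as [[R0 R1] _].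
  assert (HstN : st N <= t) by (destruct N; [change (st 0) with 0; lra | left; apply HN1; lia]).
  assert (Hlast : 1 + hnorm d beta x (-r) t <= / (1 - mu) * (1 + hnorm d beta x (-r) (st N)))
    by (apply hnorm_step; [lra | lra | lra | apply gauge_below_stop; lra]).
  assert (Heta : hnorm d beta x (-r) 0 = hnorm d beta eta (-r) 0) by (apply hnorm_agree; apply hx).
  assert (Hseg : hnorm d beta (seg x t) (-r) 0 <= hnorm d beta x (-r) t)
    by (apply hnorm_seg_le; try lra; eapply is_holder_sub; [apply solution_holder | |]; lra).
  pose proof (hnorm_stop_le N). pose proof (pow_le (/ (1 - mu)) N ltac:(lra)).
  rewrite <- pow_inv, Nat.add_1_r, <- Heta. simpl pow.
  assert (/ (1 - mu) * (1 + hnorm d beta x (-r) (st N))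
          <= / (1 - mu) * ((/ (1 - mu)) ^ N * (1 + hnorm d beta x (-r) 0)))
    by (apply Rmult_le_compat_l; lra).
  lra.
Qed.

End APrioriEstimate.


Theorem theorem2
  (d : nat) (r T nu delta beta : R)
  (hr : 0 < r) (hT : 0 < T)
  (hnu : 1/2 < nu <= 1)
  (hdelta : (1 - nu) / nu < delta <= 1)
  (hbeta : 0 < beta < nu) (hbd : beta * delta + nu > 1)
  (w : R -> R) (hw : is_holderS nu w 0 T) (hw0 : little_holderS nu w 0 T)
  (f g : (R -> Vec) -> Vec) (Dg : (R -> Vec) -> (R -> Vec) -> Vec) (Lf Lg : R)
  (hf : Hf d r f Lf) (hg : Hg d r g Dg Lg delta)
  (eta x : R -> Vec) (heta : is_holder d beta eta (-r) 0)
  (hx : is_solution d r T f g w beta eta x)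
  (mu : R) :
  let L' := Rmax Lf (vnorm d (f zeroF)) in
  let K := 1 / (1 - Rpower 2 (1 - (nu + beta))) in
  let C := 2 * (vnorm d (g zeroF) + L' + Lg * (K + 1)) in
  0 < mu -> mu < Rmin 1 C ->
  (forall t, 0 <= t <= T -> exists N,
     is_count (stop C mu beta nu T w) t N /\
     hnorm d beta (seg x t) (-r) 0
       <= / (1 - mu) ^ (N + 1) * (hnorm d beta eta (-r) 0 + 1)) /\
  (exists N, is_count (stop C mu beta nu T w) T N /\
     forall k : nat, (1 <= k)%nat -> INR k * (nu - beta) >= 1 ->
       INR N <= 2 ^ (k - 1) * (C / mu) ^ k *
         (pw T (INR k * (1 - beta)) + pw T (INR k * (nu - beta)) * holderS nu w 0 T ^ k)).
Proof.
  (* [hdelta], [hw0], [heta] and the local Hölder continuity of [Dg] serve the existence of the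
     solution, which is assumed here; the estimate only needs [nu + beta > 1]. *)
  intros L' K C Hmu HmuC1.
  assert (Hmu1 : mu < 1) by (pose proof (Rmin_l 1 C); lra).
  assert (HmuC : mu < C) by (pose proof (Rmin_r 1 C); lra).
  assert (Hnb : 1 < nu + beta) by (assert (beta * delta <= beta * 1) by (apply Rmult_le_compat_l; lra); lra).
  assert (HC : 0 < C) by lra.
  split.
  - intros t Ht.
    destruct (stop_count_exists C mu beta nu T w hT Hmu HC hbeta (proj2 hnu) hw t Ht) as [N [Hc [HN1 HN2]]].
    exists N. split; auto.
    destruct d as [|d'].
    + rewrite hnorm_dim0. apply Rmult_le_pos.
      * rewrite <- pow_inv. apply pow_le. left; apply Rinv_0_lt_compat; lra.
      * pose proof (hnorm_nonneg 0 beta eta (-r) 0). lra.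
    + apply (hnorm_seg_le_count (S d') r T nu beta delta mu Lf Lg w f g Dg eta x); auto; [lia | lra].
  - destruct (stop_count_exists C mu beta nu T w hT Hmu HC hbeta (proj2 hnu) hw T ltac:(lra))
      as [N [Hc [HN1 _]]].
    exists N. split; auto. intros k Hk Hkn.
    apply (stop_count_le C mu beta nu T w hT Hmu HC hbeta (proj2 hnu) hw k Hk (Rge_le _ _ Hkn) N HN1).
Qed.
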